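(* Let $n\ge p\ge 1$, $A$ an $n\times n$ symmetric matrix, $N=\operatorname{diag}(\mu_1,\dots,\mu_p)$ with $0<\mu_1<\dots<\mu_p$, $f(X)=\operatorname{tr}(X^TAXN)$ on $\mathrm{St}(p,n)$, and $R_X(\xi)=\mathrm{qf}(X+\xi)$ the QR retraction. For any (smooth) Riemannian metric $\langle\cdot,\cdot\rangle$ on $\mathrm{St}(p,n)$ there exists $L>0$ such that \[ \bigl|\mathrm{D}(f\circ R_X)(t\eta)[\eta]-\mathrm{D}(f\circ R_X)(0)[\eta]\bigr|\le Lt \] for all $X\in\mathrm{St}(p,n)$, $\eta\in T_X\mathrm{St}(p,n)$ with $\|\eta\|_X=1$ (norm from that metric), and $t\ge 0$. In particular ($p=1$) this holds for $f(x)=x^TAx$ on $S^{n-1}$ with the metric $g_x(\xi,\eta)=\xi^TG_x\eta$, $G_x=\operatorname{diag}(10000(x^{(1)})^2+1,1,\dots,1)$, and the retraction $R_x(\xi)=(x+\xi)/\|x+\xi\|$.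
   Context: $\mathrm{St}(p,n)=\{X\in\mathbb{R}^{n\times p}: X^TX=I_p\}$; for a full-rank $B\in\mathbb{R}^{n\times p}$, $\mathrm{qf}(B)$ denotes the $Q$-factor of the unique decomposition $B=QR'$ with $Q\in\mathrm{St}(p,n)$ and $R'$ upper triangular with positive diagonal. $x^{(1)}$ denotes the first component of $x$. *)

(* Stdlib (classical reals). Matrices are functions nat -> nat -> R,
   with explicit dimensions; entries outside the dimension range are required
   to be zero where relevant (see [supp]). *)
From Stdlib Require Import Reals ClassicalEpsilon.
Open Scope R_scope.

Definition mat := nat -> nat -> R.

Fixpoint rsum (k : nat) (f : nat -> R) : R :=
  match k with O => 0 | S k' => rsum k' f + f k' end.

Definition mzero : mat := fun _ _ => 0.
Definition madd (A B : mat) : mat := fun i j => A i j + B i j.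
Definition mscale (c : R) (A : mat) : mat := fun i j => c * A i j.
Definition mmul (k : nat) (A B : mat) : mat :=
  fun i j => rsum k (fun l => A i l * B l j).
Definition mtr (A : mat) : mat := fun i j => A j i.
Definition mtrace (k : nat) (A : mat) : R := rsum k (fun i => A i i).
Definition diagm (mu : nat -> R) : mat := fun i j => if Nat.eqb i j then mu i else 0.
Definition idm : mat := fun i j => if Nat.eqb i j then 1 else 0.
Definition elem (i j : nat) : mat :=
  fun a b => if andb (Nat.eqb a i) (Nat.eqb b j) then 1 else 0.

Definition supp (n p : nat) (X : mat) : Prop :=
  forall i j, (n <= i)%nat \/ (p <= j)%nat -> X i j = 0.

Definition meq (m k : nat) (A B : mat) : Prop :=
  forall i j, (i < m)%nat -> (j < k)%nat -> A i j = B i j.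

Definition symmetric (n : nat) (A : mat) : Prop :=
  forall i j, (i < n)%nat -> (j < n)%nat -> A i j = A j i.

Definition stiefel (n p : nat) (X : mat) : Prop :=
  supp n p X /\ meq p p (mmul n (mtr X) X) idm.

Definition tangent (n p : nat) (X xi : mat) : Prop :=
  supp n p xi /\ meq p p (madd (mmul n (mtr X) xi) (mmul n (mtr xi) X)) mzero.

Definition upper_pos_diag (p : nat) (R' : mat) : Prop :=
  (forall i j, (j < i < p)%nat -> R' i j = 0) /\
  (forall i, (i < p)%nat -> 0 < R' i i).

Definition is_qf (n p : nat) (B Q : mat) : Prop :=
  stiefel n p Q /\
  exists R', upper_pos_diag p R' /\ meq n p B (mmul p Q R').

(* qf(B): the (unique, for full-rank B) Q-factor *)
Definition qf (n p : nat) (B : mat) : mat :=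
  epsilon (inhabits mzero) (fun Q => is_qf n p B Q).

Definition costf (n p : nat) (A : mat) (mu : nat -> R) (X : mat) : R :=
  mtrace p (mmul p (mmul n (mmul n (mtr X) A) X) (diagm mu)).

Definition qr_retr (n p : nat) (X xi : mat) : mat := qf n p (madd X xi).

Definition mat_continuous (n p : nat) (F : mat -> R) : Prop :=
  forall X eps, 0 < eps -> exists delta, 0 < delta /\
    forall Y, (forall i j, (i < n)%nat -> (j < p)%nat -> Rabs (Y i j - X i j) < delta) ->
      Rabs (F Y - F X) < eps.

Fixpoint mat_Ck (n p : nat) (k : nat) (F : mat -> R) : Prop :=
  match k with
  | O => mat_continuous n p F
  | S k' => mat_continuous n p F /\
      forall i j, (i < n)%nat -> (j < p)%nat ->
        exists dF : mat -> R,
          (forall X, derivable_pt_lim (fun s => F (madd X (mscale s (elem i j)))) 0 (dF X))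
          /\ mat_Ck n p k' dF
  end.

Definition mat_smooth (n p : nat) (F : mat -> R) : Prop := forall k, mat_Ck n p k F.

(* A smooth Riemannian metric g (g X xi eta = <xi,eta>_X) on St(p,n):
   at each X in St(p,n) it is a symmetric, bilinear, positive definite form on
   T_X St(p,n), and it depends smoothly on X, in the sense that its
   coefficients are restrictions to St(p,n) of smooth functions on the ambient
   space R^{n x p}. *)
Definition riemannian_metric (n p : nat) (g : mat -> mat -> mat -> R) : Prop :=
  (forall X, stiefel n p X ->
     (forall xi eta, tangent n p X xi -> tangent n p X eta -> g X xi eta = g X eta xi) /\
     (forall a b xi1 xi2 eta, tangent n p X xi1 -> tangent n p X xi2 -> tangent n p X eta ->
        g X (madd (mscale a xi1) (mscale b xi2)) eta = a * g X xi1 eta + b * g X xi2 eta) /\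
     (forall xi, tangent n p X xi -> (exists i j, xi i j <> 0) -> 0 < g X xi xi)) /\
  exists Gc : nat -> nat -> nat -> nat -> mat -> R,
    (forall i j k l, mat_smooth n p (Gc i j k l)) /\
    (forall X xi eta, stiefel n p X -> tangent n p X xi -> tangent n p X eta ->
       g X xi eta =
       rsum n (fun i => rsum p (fun j => rsum n (fun k => rsum p (fun l =>
         Gc i j k l X * xi i j * eta k l))))).

Definition vec := nat -> R.
Definition vdot (n : nat) (x y : vec) : R := rsum n (fun i => x i * y i).
Definition vnorm (n : nat) (x : vec) : R := sqrt (vdot n x x).
Definition vadd (x y : vec) : vec := fun i => x i + y i.
Definition vscale (c : R) (x : vec) : vec := fun i => c * x i.
Definition sphere_cost (n : nat) (A : mat) (x : vec) : R :=
  rsum n (fun i => rsum n (fun k => x i * A i k * x k)).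
Definition sphere_retr (n : nat) (x xi : vec) : vec :=
  vscale (/ vnorm n (vadd x xi)) (vadd x xi).
Definition sphere_metric (n : nat) (x xi eta : vec) : R :=
  rsum n (fun i => (if Nat.eqb i 0 then 10000 * (x 0%nat)^2 + 1 else 1) * xi i * eta i).

From Stdlib Require Import Reals.
From Stdlib Require Import Lra Lia ClassicalEpsilon FunctionalExtensionality List.
Open Scope R_scope.

(* Write F(u) = f(qf(X + u eta)).  Then d1 = F'(t) and d0 = F'(0), so by the
   mean value theorem it suffices to bound F'' uniformly over X in St(p,n),
   unit tangent vectors eta and all u >= 0.  Two observations give this bound.
   (1) If X + u eta = Y R with Y = qf(X + u eta) and U = R^{-1} (upper
       triangular), then qf(X + (u + s) eta) = qf(Y + s Z) with Z = eta U, so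
       F''(u) is the second derivative at s = 0 of s |-> f(qf(Y + s Z)).  Since
       (X + u eta)^T (X + u eta) >= I, the columns of U have norm at most 1.
   (2) The unit sphere of the metric consists of bounded matrices, by
       compactness of St(p,n) and positivity of the metric; hence Z ranges in
       a bounded box while Y ranges in St(p,n), a compact set.
   The cost along a line, f(qf(Y + s Z)), is written as a closed formula
   (Gram-Schmidt), encoded as a symbolic expression; formal differentiation of
   expressions yields derivatives that are again continuous in the matrix
   entries, so the second derivative at 0 is bounded on the compact set.

   The estimate holds for every matrix A and all weights mu. *)

Lemma rsum_ext k f g : (forall i, (i < k)%nat -> f i = g i) -> rsum k f = rsum k g.
Proof. induction k; simpl; intros H; auto. rewrite IHk, H; auto; intros; apply H; lia. Qed.

Lemma rsum_plus k f g : rsum k (fun i => f i + g i) = rsum k f + rsum k g.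
Proof. induction k; simpl; [lra|rewrite IHk; lra]. Qed.

Lemma rsum_minus k f g : rsum k (fun i => f i - g i) = rsum k f - rsum k g.
Proof. induction k; simpl; [lra|rewrite IHk; lra]. Qed.

Lemma rsum_opp k f : rsum k (fun i => - f i) = - rsum k f.
Proof. induction k; simpl; [lra|rewrite IHk; lra]. Qed.

Lemma rsum_scal k c f : rsum k (fun i => c * f i) = c * rsum k f.
Proof. induction k; simpl; [lra|rewrite IHk; lra]. Qed.

Lemma rsum_scalr k c f : rsum k (fun i => f i * c) = rsum k f * c.
Proof. induction k; simpl; [lra|rewrite IHk; lra]. Qed.

Lemma rsum_zero k f : (forall i, (i < k)%nat -> f i = 0) -> rsum k f = 0.
Proof.
  intros H; rewrite (rsum_ext k f (fun _ => 0)); auto.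
  clear H; induction k; simpl; auto; rewrite IHk; lra.
Qed.

Lemma rsum_swap k m (f : nat -> nat -> R) :
  rsum k (fun i => rsum m (fun j => f i j)) = rsum m (fun j => rsum k (fun i => f i j)).
Proof.
  induction k; simpl; [symmetry; apply rsum_zero; auto|].
  rewrite IHk, <- rsum_plus; auto.
Qed.

Lemma rsum_nonneg k f : (forall i, (i < k)%nat -> 0 <= f i) -> 0 <= rsum k f.
Proof.
  induction k; simpl; intros H; [lra|].
  assert (0 <= f k) by (apply H; lia).
  assert (0 <= rsum k f) by (apply IHk; intros; apply H; lia). lra.
Qed.

Lemma rsum_le k f g : (forall i, (i < k)%nat -> f i <= g i) -> rsum k f <= rsum k g.
Proof.
  induction k; simpl; intros H; [lra|].
  assert (f k <= g k) by (apply H; lia).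
  assert (rsum k f <= rsum k g) by (apply IHk; intros; apply H; lia). lra.
Qed.

Lemma rsum_abs k f : Rabs (rsum k f) <= rsum k (fun i => Rabs (f i)).
Proof.
  induction k; simpl; [rewrite Rabs_R0; lra|].
  eapply Rle_trans; [apply Rabs_triang|]. lra.
Qed.

Lemma rsum_const k c : rsum k (fun _ => c) = INR k * c.
Proof. induction k; cbn [rsum]; [simpl; lra|rewrite IHk, S_INR; lra]. Qed.

Lemma rsum_delta k j f : (j < k)%nat ->
  rsum k (fun i => if Nat.eqb i j then f i else 0) = f j.
Proof.
  induction k; intros Hj; [lia|]. simpl. destruct (Nat.eq_dec j k).
  - subst. rewrite Nat.eqb_refl, rsum_zero; [lra|].
    intros i Hi. destruct (Nat.eqb_spec i k); [lia|auto].
  - rewrite IHk by lia. destruct (Nat.eqb_spec k j); [lia|lra].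
Qed.

Lemma rsum_delta' k j f : (j < k)%nat ->
  rsum k (fun i => if Nat.eqb j i then f i else 0) = f j.
Proof.
  intros. rewrite <- (rsum_delta k j f) by auto.
  apply rsum_ext; intros; rewrite Nat.eqb_sym; auto.
Qed.

Lemma rsum_trunc k m f : (m <= k)%nat -> (forall i, (m <= i < k)%nat -> f i = 0) ->
  rsum k f = rsum m f.
Proof.
  induction k; intros Hm Hz; simpl; [replace m with 0%nat by lia; auto|].
  destruct (Nat.eq_dec m (S k)); [subst; simpl; auto|].
  rewrite IHk; [rewrite Hz by lia; lra|lia|intros; apply Hz; lia].
Qed.

Lemma rsum_term_le k f j : (j < k)%nat -> (forall i, (i < k)%nat -> 0 <= f i) -> f j <= rsum k f.
Proof.
  induction k; intros Hj Hf; [lia|]. simpl. destruct (Nat.eq_dec j k).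
  - subst. assert (0 <= rsum k f) by (apply rsum_nonneg; intros; apply Hf; lia). lra.
  - assert (f j <= rsum k f) by (apply IHk; [lia|intros; apply Hf; lia]).
    assert (0 <= f k) by (apply Hf; lia). lra.
Qed.

Lemma rsum_quad n p (a b : mat) (w : nat -> R) :
  rsum n (fun l => rsum p (fun i => a l i * w i) * rsum p (fun j => b l j * w j)) =
  rsum p (fun i => rsum p (fun j => w i * w j * rsum n (fun l => a l i * b l j))).
Proof.
  rewrite (rsum_ext n _ (fun l => rsum p (fun i => rsum p (fun j => w i * w j * (a l i * b l j))))).
  - rewrite rsum_swap. apply rsum_ext; intros i Hi. rewrite rsum_swap. apply rsum_ext; intros j Hj.
    rewrite <- rsum_scal. apply rsum_ext; intros; lra.
  - intros l Hl. rewrite <- rsum_scalr. apply rsum_ext; intros i Hi.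
    rewrite <- rsum_scal. apply rsum_ext; intros; lra.
Qed.

Lemma skew_quad p (S : mat) (w : nat -> R) :
  (forall i j, (i < p)%nat -> (j < p)%nat -> S i j = - S j i) ->
  rsum p (fun i => rsum p (fun j => w i * w j * S i j)) = 0.
Proof.
  intros H.
  assert (E : rsum p (fun i => rsum p (fun j => w i * w j * S i j)) =
              - rsum p (fun i => rsum p (fun j => w i * w j * S i j))).
  { rewrite rsum_swap at 1. rewrite <- rsum_opp. apply rsum_ext; intros j Hj.
    rewrite <- rsum_opp. apply rsum_ext; intros i Hi. rewrite H by auto; lra. }
  lra.
Qed.

Lemma mat_ext (A B : mat) : (forall i j, A i j = B i j) -> A = B.
Proof. intros H; apply functional_extensionality; intros i; apply functional_extensionality; auto. Qed.

Lemma sqrt_sq_pos x : 0 < x -> 0 < sqrt x /\ sqrt x * sqrt x = x.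
Proof. intros; split; [apply sqrt_lt_R0; auto|apply sqrt_sqrt; lra]. Qed.

Lemma sqrt_eq1 x : sqrt x = 1 -> x = 1.
Proof.
  intros H. destruct (Rle_lt_dec 0 x).
  - rewrite <- (sqrt_sqrt x) by auto. rewrite H; lra.
  - rewrite sqrt_neg_0 in H by lra. lra.
Qed.

Lemma abs_le1 x : x * x <= 1 -> Rabs x <= 1.
Proof. intros H. unfold Rabs; destruct (Rcase_abs x); nra. Qed.

Lemma abs_le_sq x : Rabs x <= 1 + x * x.
Proof. unfold Rabs; destruct (Rcase_abs x); nra. Qed.

Lemma dpl_ext f g x l l' : derivable_pt_lim f x l -> (forall u, f u = g u) -> l = l' ->
  derivable_pt_lim g x l'.
Proof. intros H1 H2 H3. subst. replace g with f; auto. apply functional_extensionality; auto. Qed.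

Lemma dpl_shift f x l : derivable_pt_lim f x l -> derivable_pt_lim (fun h => f (x + h)) 0 l.
Proof.
  intros H eps He. destruct (H eps He) as [d Hd]. exists d. intros h H1 H2.
  replace (x + (0 + h)) with (x + h) by ring. replace (x + 0) with x by ring. apply Hd; auto.
Qed.

Lemma CV_const c : Un_cv (fun _ => c) c.
Proof. intros eps H; exists 0%nat; intros; unfold Rdist; rewrite Rminus_diag, Rabs_R0; auto. Qed.

Lemma CV_inv u l : Un_cv u l -> l <> 0 -> Un_cv (fun m => / u m) (/ l).
Proof.
  intros. apply (continuity_seq Rinv u l); auto.
  apply derivable_continuous_pt. exists (- / l ^ 2).
  apply (dpl_ext _ _ _ _ _ (derivable_pt_lim_div (fct_cte 1) id l _ _
           (derivable_pt_lim_const 1 l) (derivable_pt_lim_id l) H0)).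
  - intros; unfold div_fct, fct_cte, id; lra.
  - unfold fct_cte, id, Rsqr; field; auto.
Qed.

Lemma CV_rsum k (f : nat -> nat -> R) (g : nat -> R) :
  (forall i, (i < k)%nat -> Un_cv (fun m => f m i) (g i)) ->
  Un_cv (fun m => rsum k (f m)) (rsum k g).
Proof.
  induction k; simpl; intros H; [apply CV_const|].
  apply CV_plus; [apply IHk; intros; apply H; lia|apply H; lia].
Qed.

Lemma CV_le_bound u l M : (forall m, Rabs (u m) <= M) -> Un_cv u l -> Rabs l <= M.
Proof.
  intros Hb Hc. apply Rnot_lt_le; intros H. destruct (Hc (Rabs l - M)) as [N HN]; [lra|].
  specialize (HN N (le_n N)). specialize (Hb N). unfold Rdist in HN.
  generalize (Rabs_triang_inv l (u N)). rewrite Rabs_minus_sym in HN. lra.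
Qed.

Lemma CV_eq_const u l c : (forall m, u m = c) -> Un_cv u l -> l = c.
Proof.
  intros H1 H2. apply (UL_sequence u); auto.
  intros eps He; exists 0%nat; intros; unfold Rdist; rewrite H1, Rminus_diag, Rabs_R0; auto.
Qed.

(** * Symbolic expressions and formal derivatives

   Its formal derivative in [ETau] is again an expression; wherever the
   expression is defined (no division by zero, square roots of positive
   numbers), it is differentiable with that derivative, and its value is
   sequentially continuous in the parameters and the variable. *)

Definition env := nat -> nat -> nat -> R.

Inductive expr :=
| ECst (r : R) | EPar (k i j : nat) | ETau
| EAdd (a b : expr) | EMul (a b : expr) | EInv (a : expr) | ESqrt (a : expr).

Fixpoint expr_val (e : env) (s : R) (x : expr) : R :=
  match x with
  | ECst r => r | EPar k i j => e k i j | ETau => s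
  | EAdd a b => expr_val e s a + expr_val e s b
  | EMul a b => expr_val e s a * expr_val e s b
  | EInv a => / expr_val e s a
  | ESqrt a => sqrt (expr_val e s a)
  end.

Fixpoint dexpr (x : expr) : expr :=
  match x with
  | ECst _ => ECst 0 | EPar _ _ _ => ECst 0 | ETau => ECst 1
  | EAdd a b => EAdd (dexpr a) (dexpr b)
  | EMul a b => EAdd (EMul (dexpr a) b) (EMul a (dexpr b))
  | EInv a => EMul (ECst (-1)) (EMul (dexpr a) (EInv (EMul a a)))
  | ESqrt a => EMul (dexpr a) (EInv (EMul (ECst 2) (ESqrt a)))
  end.

Fixpoint defined_at (e : env) (s : R) (x : expr) : Prop :=
  match x with
  | ECst _ | EPar _ _ _ | ETau => True
  | EAdd a b | EMul a b => defined_at e s a /\ defined_at e s b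
  | EInv a => defined_at e s a /\ expr_val e s a <> 0
  | ESqrt a => defined_at e s a /\ 0 < expr_val e s a
  end.

Fixpoint params_in (P : nat -> nat -> nat -> Prop) (x : expr) : Prop :=
  match x with
  | ECst _ | ETau => True
  | EPar k i j => P k i j
  | EAdd a b | EMul a b => params_in P a /\ params_in P b
  | EInv a | ESqrt a => params_in P a
  end.

Lemma defined_dexpr e s x : defined_at e s x -> defined_at e s (dexpr x).
Proof.
  induction x; simpl; intros W; try tauto;
  destruct W as [W1 W2]; repeat split; auto;
  try (intros H; apply Rmult_integral in H; tauto);
  try (assert (0 < sqrt (expr_val e s x)) by (apply sqrt_lt_R0; auto); lra).
Qed.

Lemma params_in_dexpr P x : params_in P x -> params_in P (dexpr x).
Proof. induction x; simpl; intuition. Qed.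

Lemma expr_deriv e x s : defined_at e s x ->
  derivable_pt_lim (fun u => expr_val e u x) s (expr_val e s (dexpr x)).
Proof.
  induction x; simpl; intros W.
  - apply (dpl_ext _ _ _ _ _ (derivable_pt_lim_const r s)); reflexivity.
  - apply (dpl_ext _ _ _ _ _ (derivable_pt_lim_const (e k i j) s)); reflexivity.
  - apply (dpl_ext _ _ _ _ _ (derivable_pt_lim_id s)); reflexivity.
  - destruct W. apply (dpl_ext _ _ _ _ _ (derivable_pt_lim_plus _ _ _ _ _ (IHx1 H) (IHx2 H0))); reflexivity.
  - destruct W. apply (dpl_ext _ _ _ _ _ (derivable_pt_lim_mult _ _ _ _ _ (IHx1 H) (IHx2 H0))); reflexivity.
  - destruct W.
    apply (dpl_ext _ _ _ _ _ (derivable_pt_lim_div (fct_cte 1) _ _ _ _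
             (derivable_pt_lim_const 1 s) (IHx H) H0)).
    + intros; unfold div_fct, fct_cte; lra.
    + unfold fct_cte, Rsqr. field; auto.
  - destruct W.
    apply (dpl_ext _ _ _ _ _ (derivable_pt_lim_comp _ sqrt _ _ _ (IHx H) (derivable_pt_lim_sqrt _ H0))).
    + intros; reflexivity.
    + assert (0 < sqrt (expr_val e s x)) by (apply sqrt_lt_R0; auto). field; lra.
Qed.

Lemma expr_cont P e s x (es : nat -> env) (ss : nat -> R) :
  defined_at e s x -> params_in P x ->
  (forall k i j, P k i j -> Un_cv (fun m => es m k i j) (e k i j)) ->
  Un_cv ss s -> Un_cv (fun m => expr_val (es m) (ss m) x) (expr_val e s x).
Proof.
  intros W V HP Hs. induction x; simpl in *.
  - apply CV_const.
  - auto.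
  - auto.
  - destruct W, V. apply CV_plus; auto.
  - destruct W, V. apply CV_mult; auto.
  - destruct W. apply CV_inv; auto.
  - destruct W. apply (continuity_seq sqrt); auto. apply continuity_pt_sqrt; lra.
Qed.

Lemma dexpr_shift_agree e1 e2 x tau :
  (forall s, defined_at e1 (tau + s) x) -> (forall s, defined_at e2 s x) ->
  (forall s, expr_val e1 (tau + s) x = expr_val e2 s x) ->
  forall s, expr_val e1 (tau + s) (dexpr x) = expr_val e2 s (dexpr x).
Proof.
  intros D1 D2 E s. apply (uniqueness_limite (fun h => expr_val e2 (s + h) x) 0).
  - eapply dpl_ext; [apply (dpl_shift (fun u => expr_val e1 u x)), expr_deriv, D1| |reflexivity].
    intros h. rewrite <- E. f_equal. ring.
  - apply (dpl_shift (fun u => expr_val e2 u x)), expr_deriv, D2.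
Qed.

Fixpoint esum k (f : nat -> expr) : expr :=
  match k with O => ECst 0 | S k' => EAdd (esum k' f) (f k') end.

Lemma val_esum e s k f : expr_val e s (esum k f) = rsum k (fun i => expr_val e s (f i)).
Proof. induction k; simpl; auto. rewrite IHk; auto. Qed.

Lemma defined_esum e s k f : (forall i, (i < k)%nat -> defined_at e s (f i)) -> defined_at e s (esum k f).
Proof. induction k; simpl; auto. intros; split; [apply IHk; intros; apply H|apply H]; lia. Qed.

Lemma params_in_esum P k f : (forall i, (i < k)%nat -> params_in P (f i)) -> params_in P (esum k f).
Proof. induction k; simpl; auto. intros; split; [apply IHk; intros; apply H|apply H]; lia. Qed.

(** * Gram-Schmidt orthonormalization and the QR factor

   [gsQ n B m] holds in its first m columns the Gram-Schmidt
   orthonormalization of the first m columns of the n x p matrix B, and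
   [gsU n B m] the upper-triangular matrix U with B U = Q (the inverse of the
   R-factor).  When B^T B >= I (in particular for B = X + tau eta with X in
   St(p,n) and eta tangent at X), the procedure never divides by zero, and
   gsQ n B p is the unique Q-factor qf(B). *)

Definition col_dot n (Q : mat) k (B : mat) j := rsum n (fun l => Q l k * B l j).

Definition gs_step_res n (B Q : mat) m i :=
  B i m + -1 * rsum m (fun k => col_dot n Q k B m * Q i k).

Fixpoint gsQ n (B : mat) m : mat :=
  match m with
  | O => mzero
  | S m' => fun i j => if Nat.eqb j m' then
       gs_step_res n B (gsQ n B m') m' i *
         / sqrt (rsum n (fun l => gs_step_res n B (gsQ n B m') m' l * gs_step_res n B (gsQ n B m') m' l))
     else gsQ n B m' i j
  end.

Definition gs_norm2 n B m :=
  rsum n (fun l => gs_step_res n B (gsQ n B m) m l * gs_step_res n B (gsQ n B m) m l).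

Fixpoint gsU n (B : mat) m : mat :=
  match m with
  | O => mzero
  | S m' => fun i j => if Nat.eqb j m' then
       ((if Nat.eqb i m' then 1 else 0) + -1 * rsum m' (fun k => col_dot n (gsQ n B m') k B m' * gsU n B m' i k))
        * / sqrt (gs_norm2 n B m')
     else gsU n B m' i j
  end.

Definition gsq n B j i := gsQ n B (S j) i j.
Definition gsu n B j i := gsU n B (S j) i j.

Lemma gsQ_col n B m i j : gsQ n B m i j = if Nat.ltb j m then gsq n B j i else 0.
Proof.
  induction m; simpl; [destruct (Nat.ltb_spec j 0); [lia|reflexivity]|].
  destruct (Nat.eqb_spec j m).
  - subst. destruct (Nat.ltb_spec m (S m)); [|lia].
    unfold gsq; simpl; rewrite Nat.eqb_refl; reflexivity.
  - rewrite IHm. destruct (Nat.ltb_spec j m), (Nat.ltb_spec j (S m)); auto; lia.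
Qed.

Lemma gsU_col n B m i j : gsU n B m i j = if Nat.ltb j m then gsu n B j i else 0.
Proof.
  induction m; simpl; [destruct (Nat.ltb_spec j 0); [lia|reflexivity]|].
  destruct (Nat.eqb_spec j m).
  - subst. destruct (Nat.ltb_spec m (S m)); [|lia].
    unfold gsu; simpl; rewrite Nat.eqb_refl; reflexivity.
  - rewrite IHm. destruct (Nat.ltb_spec j m), (Nat.ltb_spec j (S m)); auto; lia.
Qed.

Lemma gsQ_lt n B m i k : (k < m)%nat -> gsQ n B m i k = gsq n B k i.
Proof. intros; rewrite gsQ_col; destruct (Nat.ltb_spec k m); auto; lia. Qed.
Lemma gsQ_ge n B m i k : (m <= k)%nat -> gsQ n B m i k = 0.
Proof. intros; rewrite gsQ_col; destruct (Nat.ltb_spec k m); auto; lia. Qed.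
Lemma gsU_lt n B m i k : (k < m)%nat -> gsU n B m i k = gsu n B k i.
Proof. intros; rewrite gsU_col; destruct (Nat.ltb_spec k m); auto; lia. Qed.
Lemma gsU_ge n B m i k : (m <= k)%nat -> gsU n B m i k = 0.
Proof. intros; rewrite gsU_col; destruct (Nat.ltb_spec k m); auto; lia. Qed.

Definition gs_coef n B k m := rsum n (fun l => gsq n B k l * B l m).
Definition gs_res n B m i := B i m - rsum m (fun k => gs_coef n B k m * gsq n B k i).
Definition gs_resU n B m i := (if Nat.eqb i m then 1 else 0) - rsum m (fun k => gs_coef n B k m * gsu n B k i).

Lemma gs_step_res_eq n B m i : gs_step_res n B (gsQ n B m) m i = gs_res n B m i.
Proof.
  unfold gs_step_res, gs_res, col_dot, gs_coef.
  rewrite (rsum_ext m _ (fun k => rsum n (fun l => gsq n B k l * B l m) * gsq n B k i)); [lra|].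
  intros k Hk. rewrite gsQ_lt by auto. f_equal. apply rsum_ext; intros; rewrite (gsQ_lt n B m); auto.
Qed.

Lemma gs_norm2_eq n B m : gs_norm2 n B m = rsum n (fun l => gs_res n B m l * gs_res n B m l).
Proof. unfold gs_norm2; apply rsum_ext; intros; rewrite gs_step_res_eq; auto. Qed.

Lemma gsq_eq n B m i : gsq n B m i = gs_res n B m i * / sqrt (gs_norm2 n B m).
Proof. unfold gsq; simpl; rewrite Nat.eqb_refl, gs_step_res_eq; reflexivity. Qed.

Lemma gsu_eq n B m i : gsu n B m i = gs_resU n B m i * / sqrt (gs_norm2 n B m).
Proof.
  unfold gsu, gs_resU; simpl; rewrite Nat.eqb_refl. f_equal.
  rewrite (rsum_ext m _ (fun k => gs_coef n B k m * gsu n B k i)); [lra|].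
  intros k Hk. unfold col_dot, gs_coef. rewrite gsU_lt by auto. f_equal.
  apply rsum_ext; intros; rewrite gsQ_lt; auto.
Qed.

Lemma gsu_upper n B : forall j i, (j < i)%nat -> gsu n B j i = 0.
Proof.
  intros j; induction j as [j IH] using (well_founded_induction Wf_nat.lt_wf).
  intros i Hi. rewrite gsu_eq. unfold gs_resU. rewrite rsum_zero.
  - destruct (Nat.eqb_spec i j); [lia|]. lra.
  - intros k Hk. rewrite IH by lia. lra.
Qed.

Lemma gs_resU_diag n B m : gs_resU n B m m = 1.
Proof. unfold gs_resU. rewrite Nat.eqb_refl, rsum_zero; [lra|]. intros k Hk; rewrite gsu_upper by auto; lra. Qed.

Definition gram_ge_id n p (B : mat) := forall w : nat -> R,
  rsum p (fun i => w i * w i) <=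
  rsum n (fun l => rsum p (fun i => B l i * w i) * rsum p (fun i => B l i * w i)).

Definition gs_orthonormal n B m := forall j k, (j < m)%nat -> (k < m)%nat ->
  rsum n (fun l => gsq n B j l * gsq n B k l) = if Nat.eqb j k then 1 else 0.
Definition gs_BU n p B m := forall j, (j < m)%nat ->
  forall l, gsq n B j l = rsum p (fun i => B l i * gsu n B j i).
Definition gs_regular n B m := forall j, (j < m)%nat -> 0 < gs_norm2 n B j.

Lemma gs_res_BU n p B m : (m < p)%nat -> gs_BU n p B m ->
  forall l, gs_res n B m l = rsum p (fun i => B l i * gs_resU n B m i).
Proof.
  intros Hmp HBU l. unfold gs_res, gs_resU.
  rewrite (rsum_ext p _ (fun i => (if Nat.eqb m i then B l i else 0) -
                                  rsum m (fun k => gs_coef n B k m * (B l i * gsu n B k i)))).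
  - rewrite rsum_minus, rsum_delta' by auto. f_equal.
    rewrite rsum_swap. apply rsum_ext. intros k Hk. rewrite HBU by auto.
    rewrite <- rsum_scal. apply rsum_ext; intros; lra.
  - intros i Hi. rewrite Rmult_minus_distr_l. f_equal.
    + destruct (Nat.eqb_spec i m), (Nat.eqb_spec m i); subst; try lia; lra.
    + rewrite <- rsum_scal. apply rsum_ext; intros; lra.
Qed.

Lemma gs_res_orth n B m : gs_orthonormal n B m ->
  forall k, (k < m)%nat -> rsum n (fun l => gs_res n B m l * gsq n B k l) = 0.
Proof.
  intros HON k Hk. unfold gs_res.
  rewrite (rsum_ext n _ (fun l => gsq n B k l * B l m -
             rsum m (fun k' => gs_coef n B k' m * (gsq n B k' l * gsq n B k l)))).
  - rewrite rsum_minus, rsum_swap.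
    rewrite (rsum_ext m _ (fun k' => if Nat.eqb k' k then gs_coef n B k' m else 0)).
    + rewrite rsum_delta by auto. unfold gs_coef. lra.
    + intros k' Hk'. rewrite rsum_scal, HON by auto. destruct (Nat.eqb k' k); lra.
  - intros l Hl. rewrite Rmult_minus_distr_r. f_equal; [lra|].
    rewrite <- rsum_scalr. apply rsum_ext; intros; lra.
Qed.

Lemma gs_norm2_pos n p B m : gram_ge_id n p B -> (m < p)%nat -> gs_BU n p B m ->
  0 < gs_norm2 n B m.
Proof.
  intros HFR Hmp HBU. rewrite gs_norm2_eq.
  rewrite (rsum_ext n _ (fun l => rsum p (fun i => B l i * gs_resU n B m i) *
                                  rsum p (fun i => B l i * gs_resU n B m i)))
    by (intros; rewrite (gs_res_BU n p); auto).
  eapply Rlt_le_trans; [|apply HFR].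
  apply Rlt_le_trans with (gs_resU n B m m * gs_resU n B m m); [rewrite gs_resU_diag; lra|].
  apply rsum_term_le with (f := fun i => gs_resU n B m i * gs_resU n B m i); auto. intros; nra.
Qed.

Lemma gs_step n p B m : gram_ge_id n p B -> (m < p)%nat ->
  gs_orthonormal n B m -> gs_BU n p B m -> gs_regular n B m ->
  gs_orthonormal n B (S m) /\ gs_BU n p B (S m) /\ gs_regular n B (S m).
Proof.
  intros HFR Hmp HON HBU HPOS.
  assert (Hpos := gs_norm2_pos n p B m HFR Hmp HBU).
  destruct (sqrt_sq_pos _ Hpos) as [Hs1 Hs2]. set (s := sqrt (gs_norm2 n B m)) in *.
  assert (Hqm : forall l, gsq n B m l = gs_res n B m l * / s) by (intros; apply gsq_eq).
  split; [|split].
  - assert (Hmm : rsum n (fun l => gsq n B m l * gsq n B m l) = 1).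
    { rewrite (rsum_ext n _ (fun l => / s * / s * (gs_res n B m l * gs_res n B m l)))
        by (intros; rewrite Hqm; lra).
      rewrite rsum_scal, <- gs_norm2_eq, <- Hs2. field. lra. }
    assert (Hmk : forall k, (k < m)%nat -> rsum n (fun l => gsq n B m l * gsq n B k l) = 0).
    { intros k Hk. rewrite (rsum_ext n _ (fun l => / s * (gs_res n B m l * gsq n B k l)))
        by (intros; rewrite Hqm; lra).
      rewrite rsum_scal, gs_res_orth by auto. lra. }
    intros j k Hj Hk. destruct (Nat.eq_dec j m), (Nat.eq_dec k m); subst.
    + rewrite Nat.eqb_refl; auto.
    + rewrite Hmk by lia. destruct (Nat.eqb_spec m k); [lia|auto].
    + rewrite (rsum_ext n _ (fun l => gsq n B m l * gsq n B j l)) by (intros; lra).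
      rewrite Hmk by lia. destruct (Nat.eqb_spec j m); [lia|auto].
    + apply HON; lia.
  - intros j Hj l. destruct (Nat.eq_dec j m); [subst|apply HBU; lia].
    rewrite Hqm, (gs_res_BU n p) by auto. rewrite <- rsum_scalr.
    apply rsum_ext; intros. rewrite gsu_eq. fold s. lra.
  - intros j Hj. destruct (Nat.eq_dec j m); [subst; auto|apply HPOS; lia].
Qed.

Lemma gs_invariants n p B m : gram_ge_id n p B -> (m <= p)%nat ->
  gs_orthonormal n B m /\ gs_BU n p B m /\ gs_regular n B m.
Proof.
  intros HFR; induction m; intros Hm.
  - unfold gs_orthonormal, gs_BU, gs_regular; repeat split; intros; lia.
  - destruct IHm as [A1 [A2 A3]]; [lia|]. apply gs_step; auto; lia.
Qed.

Lemma gs_res_q n B j l : 0 < gs_norm2 n B j -> gs_res n B j l = sqrt (gs_norm2 n B j) * gsq n B j l.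
Proof. intros H. rewrite gsq_eq. destruct (sqrt_sq_pos _ H). field. lra. Qed.

Lemma gs_coef_diag n B j : gs_orthonormal n B (S j) -> 0 < gs_norm2 n B j ->
  gs_coef n B j j = sqrt (gs_norm2 n B j).
Proof.
  intros HON Hp. unfold gs_coef.
  rewrite (rsum_ext n _ (fun l => sqrt (gs_norm2 n B j) * (gsq n B j l * gsq n B j l) +
                                  rsum j (fun k => gs_coef n B k j * (gsq n B j l * gsq n B k l)))).
  - rewrite rsum_plus, rsum_scal, HON by lia. rewrite Nat.eqb_refl, rsum_swap, rsum_zero; [lra|].
    intros k Hk. rewrite rsum_scal, HON by lia. destruct (Nat.eqb_spec j k); [lia|lra].
  - intros l Hl. replace (B l j) with (gs_res n B j l + rsum j (fun k => gs_coef n B k j * gsq n B k l))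
      by (unfold gs_res; lra).
    rewrite gs_res_q by auto. rewrite Rmult_plus_distr_l. f_equal; [lra|].
    rewrite <- rsum_scal. apply rsum_ext; intros; lra.
Qed.

Definition gsR n B : mat := fun k j => if Nat.leb k j then gs_coef n B k j else 0.

Lemma gs_is_qf n p B : supp n p B -> gram_ge_id n p B ->
  is_qf n p B (gsQ n B p) /\ gs_regular n B p /\ gs_orthonormal n B p /\ gs_BU n p B p.
Proof.
  intros HS HFR. destruct (gs_invariants n p B p HFR (le_n p)) as [HON [HBU HPOS]].
  assert (Hq0 : forall j l, (j < p)%nat -> (n <= l)%nat -> gsq n B j l = 0).
  { intros j l Hj Hl. rewrite HBU by auto. apply rsum_zero; intros. rewrite HS by lia. lra. }
  split; [|auto]. split; [split|].
  - intros i j [H|H]; [destruct (Nat.ltb_spec j p)|]; [rewrite gsQ_lt by auto; apply Hq0; auto|..];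
      apply gsQ_ge; auto.
  - intros i j Hi Hj. unfold mmul, mtr, idm. rewrite <- HON by auto.
    apply rsum_ext; intros. rewrite !gsQ_lt by auto. auto.
  - exists (gsR n B). split; [split|].
    + intros i j Hij. unfold gsR. destruct (Nat.leb_spec i j); [lia|auto].
    + intros i Hi. unfold gsR. rewrite Nat.leb_refl, gs_coef_diag.
      * apply sqrt_lt_R0; apply HPOS; auto.
      * intros a b Ha Hb; apply HON; lia.
      * apply HPOS; auto.
    + intros l j Hl Hj. unfold mmul.
      rewrite (rsum_trunc p (S j)); [|lia|intros k Hk; unfold gsR; destruct (Nat.leb_spec k j); [lia|lra]].
      simpl. unfold gsR at 2. rewrite Nat.leb_refl.
      assert (HON' : gs_orthonormal n B (S j)) by (intros a b Ha Hb; apply HON; lia).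
      rewrite (gs_coef_diag n B j HON' (HPOS j Hj)), (gsQ_lt n B p l j Hj).
      replace (B l j) with (gs_res n B j l + rsum j (fun k => gs_coef n B k j * gsq n B k l))
        by (unfold gs_res; lra).
      rewrite (gs_res_q n B j l (HPOS j Hj)).
      rewrite (rsum_ext j (fun l0 => gsQ n B p l l0 * gsR n B l0 j) (fun k => gs_coef n B k j * gsq n B k l)); [lra|].
      intros k Hk. rewrite gsQ_lt by lia. unfold gsR. destruct (Nat.leb_spec k j); [lra|lia].
Qed.

Lemma gs_uniq n p B Q' R' : supp n p B -> stiefel n p Q' -> upper_pos_diag p R' ->
  meq n p B (mmul p Q' R') ->
  forall m, (m <= p)%nat -> forall j, (j < m)%nat ->
    (forall l, gsq n B j l = Q' l j) /\ 0 < gs_norm2 n B j /\ sqrt (gs_norm2 n B j) = R' j j.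
Proof.
  intros HS [HQs HQo] [HRu HRp] HE. induction m; intros Hm j Hj; [lia|].
  assert (IH := IHm ltac:(lia)). destruct (Nat.eq_dec j m); [subst|apply IH; lia].
  assert (Hcoef : forall k, (k < m)%nat -> gs_coef n B k m = R' k m).
  { intros k Hk. unfold gs_coef.
    rewrite (rsum_ext n _ (fun l => rsum p (fun k' => Q' l k * Q' l k' * R' k' m))).
    - rewrite rsum_swap, (rsum_ext p _ (fun k' => if Nat.eqb k k' then R' k' m else 0)).
      + rewrite rsum_delta' by lia. auto.
      + intros k' Hk'. rewrite rsum_scalr. generalize (HQo k k' ltac:(lia) Hk'). unfold mmul, mtr, idm.
        intros ->. destruct (Nat.eqb k k'); lra.
    - intros l Hl. destruct (IH k Hk) as [Hq _]. rewrite Hq, HE by lia. unfold mmul.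
      rewrite <- rsum_scal. apply rsum_ext; intros; lra. }
  assert (Hres : forall l, gs_res n B m l = R' m m * Q' l m).
  { intros l. unfold gs_res. rewrite (rsum_ext m _ (fun k => Q' l k * R' k m)).
    - destruct (Nat.ltb_spec l n).
      + rewrite HE by lia. unfold mmul.
        rewrite (rsum_trunc p (S m)); [simpl; lra|lia|intros k Hk; rewrite HRu by lia; lra].
      + rewrite HS, (HQs l m), rsum_zero by (lia || (intros k Hk; rewrite (HQs l k) by lia; lra)). lra.
    - intros k Hk. rewrite Hcoef by auto. destruct (IH k Hk) as [Hq _]. rewrite Hq. lra. }
  assert (Hn : gs_norm2 n B m = R' m m * R' m m).
  { rewrite gs_norm2_eq, (rsum_ext n _ (fun l => R' m m * R' m m * (Q' l m * Q' l m)))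
      by (intros; rewrite Hres; lra).
    rewrite rsum_scal. generalize (HQo m m ltac:(lia) ltac:(lia)). unfold mmul, mtr, idm.
    rewrite Nat.eqb_refl. intros ->. lra. }
  assert (HR := HRp m ltac:(lia)).
  assert (Hsq : sqrt (gs_norm2 n B m) = R' m m) by (rewrite Hn; apply sqrt_square; lra).
  split; [|split; auto; rewrite Hn; nra].
  intros l. rewrite gsq_eq, Hres, Hsq. field; lra.
Qed.

Lemma qf_unique n p B Q' : supp n p B -> is_qf n p B Q' ->
  qf n p B = Q' /\ gsQ n B p = Q' /\ gs_regular n B p.
Proof.
  assert (Hgs : forall Q, supp n p B -> is_qf n p B Q -> gsQ n B p = Q /\ gs_regular n B p).
  { intros Q HS [HQ [R' [HR HE]]].
    assert (U := gs_uniq n p B Q R' HS HQ HR HE p (le_n p)).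
    split; [apply mat_ext; intros i j; destruct (Nat.ltb_spec j p)|intros j Hj; apply U; auto].
    - rewrite gsQ_lt by auto. apply U; auto.
    - rewrite gsQ_ge by auto. destruct HQ as [HQs _]. rewrite HQs; auto. }
  intros HS H. assert (Hqf : is_qf n p B (qf n p B)) by (unfold qf; apply epsilon_spec; exists Q'; auto).
  destruct (Hgs Q' HS H) as [E1 E2]. destruct (Hgs _ HS Hqf) as [E3 _].
  split; [congruence|auto].
Qed.

Lemma supp_madd n p X Y u : supp n p X -> supp n p Y -> supp n p (madd X (mscale u Y)).
Proof. intros HX HY i j H. unfold madd, mscale. rewrite HX, HY by auto. lra. Qed.

(* for X in St(p,n) and eta tangent at X, (X + tau eta)^T (X + tau eta)
   = I + tau^2 eta^T eta >= I, since X^T eta is skew-symmetric *)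
Lemma gram_ge_id_line n p X eta tau : stiefel n p X -> tangent n p X eta ->
  gram_ge_id n p (madd X (mscale tau eta)).
Proof.
  intros [HXs HXo] [Hes Het] w. unfold madd, mscale.
  rewrite (rsum_ext n _ (fun l => rsum p (fun i => X l i * w i) * rsum p (fun j => X l j * w j) +
     2 * tau * (rsum p (fun i => X l i * w i) * rsum p (fun j => eta l j * w j)) +
     tau * tau * (rsum p (fun i => eta l i * w i) * rsum p (fun j => eta l j * w j)))).
  - rewrite !rsum_plus, !rsum_scal, !rsum_quad.
    rewrite (skew_quad p (fun i j => rsum n (fun l => X l i * eta l j))).
    + rewrite (rsum_ext p (fun i => rsum p (fun j => w i * w j * rsum n (fun l => X l i * X l j)))
                          (fun i => w i * w i)).
      * assert (0 <= rsum p (fun i => rsum p (fun j => w i * w j * rsum n (fun l => eta l i * eta l j)))).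
        { rewrite <- rsum_quad. apply rsum_nonneg; intros. nra. }
        nra.
      * intros i Hi. rewrite (rsum_ext p _ (fun j => if Nat.eqb i j then w i * w j else 0)).
        -- rewrite rsum_delta' by auto. auto.
        -- intros j Hj. generalize (HXo i j Hi Hj). unfold mmul, mtr, idm.
           intros ->. destruct (Nat.eqb i j); lra.
    + intros i j Hi Hj. generalize (Het i j Hi Hj). unfold madd, mmul, mtr, mzero. intros H.
      rewrite (rsum_ext n (fun l => eta l i * X l j) (fun l => X l j * eta l i)) in H by (intros; lra). lra.
  - intros l Hl.
    rewrite (rsum_ext p (fun i => (X l i + tau * eta l i) * w i) (fun i => X l i * w i + tau * (eta l i * w i)))
      by (intros; lra).
    rewrite rsum_plus, rsum_scal. ring.
Qed.

Lemma qf_line n p X eta u : stiefel n p X -> tangent n p X eta ->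
  qf n p (madd X (mscale u eta)) = gsQ n (madd X (mscale u eta)) p.
Proof.
  intros HX Ht. assert (HS : supp n p (madd X (mscale u eta))) by (apply supp_madd; [apply HX|apply Ht]).
  destruct (gs_is_qf n p _ HS (gram_ge_id_line n p X eta u HX Ht)) as [H _].
  destruct (qf_unique n p _ _ HS H) as [E _]. exact E.
Qed.

Lemma stiefel_regular n p Y : stiefel n p Y -> gs_regular n Y p.
Proof.
  intros HY. assert (HS : supp n p Y) by apply HY.
  assert (H : is_qf n p Y Y).
  { split; auto. exists idm. split; [split|].
    - intros i j Hij. unfold idm. destruct (Nat.eqb_spec i j); [lia|auto].
    - intros i Hi. unfold idm. rewrite Nat.eqb_refl. lra.
    - intros i j Hi Hj. unfold mmul, idm.
      rewrite (rsum_ext p _ (fun k => if Nat.eqb k j then Y i k else 0)) by (intros k Hk; destruct (Nat.eqb k j); lra).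
      rewrite rsum_delta; auto. }
  apply (qf_unique n p Y Y HS H).
Qed.

(* the inverse R-factor U: upper triangular with positive diagonal, Q = B U,
   and its columns have norm at most 1 because B^T B >= I *)
Lemma gsU_facts n p B : supp n p B -> gram_ge_id n p B ->
  (forall i j, (j < i)%nat -> gsU n B p i j = 0) /\
  (forall i j, (p <= j)%nat -> gsU n B p i j = 0) /\
  (forall j, (j < p)%nat -> 0 < gsU n B p j j) /\
  (forall j, (j < p)%nat -> rsum p (fun i => gsU n B p i j * gsU n B p i j) <= 1) /\
  (forall l j, (j < p)%nat -> gsQ n B p l j = rsum p (fun i => B l i * gsU n B p i j)).
Proof.
  intros HS HFR. destruct (gs_is_qf n p B HS HFR) as [_ [HPOS [HON HBU]]].
  split; [|split; [|split; [|split]]].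
  - intros i j Hij. rewrite gsU_col. destruct (Nat.ltb j p); auto. apply gsu_upper; auto.
  - intros; apply gsU_ge; auto.
  - intros j Hj. rewrite gsU_lt, gsu_eq, gs_resU_diag by auto.
    destruct (sqrt_sq_pos _ (HPOS j Hj)). rewrite Rmult_1_l. apply Rinv_0_lt_compat; auto.
  - intros j Hj. eapply Rle_trans; [apply (HFR (fun i => gsU n B p i j))|].
    rewrite (rsum_ext n _ (fun l => gsq n B j l * gsq n B j l)).
    + rewrite HON, Nat.eqb_refl by auto; lra.
    + intros l Hl. rewrite (HBU j Hj l), (rsum_ext p _ (fun i => B l i * gsu n B j i)); auto.
      intros; rewrite gsU_lt; auto.
  - intros l j Hj. rewrite gsQ_lt, HBU by auto. apply rsum_ext; intros; rewrite gsU_lt; auto.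
Qed.

Lemma is_qf_mulU n p M Q' U : is_qf n p M Q' ->
  (forall i j, (j < i)%nat -> (i < p)%nat -> U i j = 0) ->
  (forall j, (j < p)%nat -> 0 < U j j) ->
  is_qf n p (mmul p M U) Q'.
Proof.
  intros [HQ [R' [[HRu HRp] HE]]] HUu HUp. split; auto.
  exists (mmul p R' U). split; [split|].
  - intros i j [Hji Hip]. unfold mmul. apply rsum_zero. intros k Hk.
    destruct (Nat.ltb_spec k i); [rewrite HRu by lia|rewrite HUu by lia]; lra.
  - intros i Hi. unfold mmul.
    rewrite (rsum_ext p _ (fun k => if Nat.eqb k i then R' i k * U k i else 0)).
    + rewrite rsum_delta by auto. apply Rmult_lt_0_compat; auto.
    + intros k Hk. destruct (Nat.eqb_spec k i); [subst; auto|].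
      destruct (Nat.ltb_spec k i); [rewrite HRu by lia|rewrite HUu by lia]; lra.
  - intros l j Hl Hj. unfold mmul at 1.
    rewrite (rsum_ext p _ (fun k => rsum p (fun k' => Q' l k' * R' k' k * U k j))).
    + rewrite rsum_swap. unfold mmul. apply rsum_ext. intros k' Hk'.
      rewrite <- rsum_scal. apply rsum_ext; intros; lra.
    + intros k Hk. rewrite HE by auto. unfold mmul. rewrite <- rsum_scalr. auto.
Qed.

Lemma is_qf_meq n p B1 B2 Q : meq n p B1 B2 -> is_qf n p B1 Q -> is_qf n p B2 Q.
Proof.
  intros HE [HQ [R' [HR HE']]]. split; auto. exists R'. split; auto.
  intros i j Hi Hj. rewrite <- HE by auto. auto.
Qed.

(** * The cost along a line as a symbolic expression

   For an environment holding a base point Y (parameter 0) and a direction Z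
   (parameter 1), [line_cost_expr] evaluates at s to f(gsQ(Y + s Z)), the cost
   at the Gram-Schmidt Q-factor of Y + s Z. *)

Definition emat := nat -> nat -> expr.
Definition emat_val e s (P : emat) : mat := fun i j => expr_val e s (P i j).

Definition gs_step_res_expr n (Bx Q : emat) m i :=
  EAdd (Bx i m) (EMul (ECst (-1)) (esum m (fun k => EMul (esum n (fun l => EMul (Q l k) (Bx l m))) (Q i k)))).

Fixpoint gsQ_expr n (Bx : emat) m : emat :=
  match m with
  | O => fun _ _ => ECst 0
  | S m' => fun i j => if Nat.eqb j m' then
      EMul (gs_step_res_expr n Bx (gsQ_expr n Bx m') m' i)
        (EInv (ESqrt (esum n (fun l => EMul (gs_step_res_expr n Bx (gsQ_expr n Bx m') m' l)
                                            (gs_step_res_expr n Bx (gsQ_expr n Bx m') m' l)))))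
      else gsQ_expr n Bx m' i j
  end.

Lemma val_gs_step_res_expr e s n Bx Q m i :
  expr_val e s (gs_step_res_expr n Bx Q m i) = gs_step_res n (emat_val e s Bx) (emat_val e s Q) m i.
Proof.
  unfold gs_step_res_expr, gs_step_res; simpl. rewrite val_esum. do 2 f_equal.
  apply rsum_ext; intros. simpl. rewrite val_esum. reflexivity.
Qed.

Lemma val_gsQ_expr e s n Bx m : emat_val e s (gsQ_expr n Bx m) = gsQ n (emat_val e s Bx) m.
Proof.
  induction m; apply mat_ext; intros i j; [reflexivity|].
  unfold emat_val at 1. cbn [gsQ_expr gsQ]. destruct (Nat.eqb j m).
  - cbn [expr_val]. rewrite val_gs_step_res_expr, val_esum, IHm. do 3 f_equal.
    apply rsum_ext; intros. cbn [expr_val]. rewrite val_gs_step_res_expr, IHm. reflexivity.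
  - change (emat_val e s (gsQ_expr n Bx m) i j = gsQ n (emat_val e s Bx) m i j). rewrite IHm; reflexivity.
Qed.

Lemma defined_gsQ_expr e s n Bx m : (forall i j, defined_at e s (Bx i j)) ->
  gs_regular n (emat_val e s Bx) m -> forall i j, defined_at e s (gsQ_expr n Bx m i j).
Proof.
  intros HB. induction m; intros HP i j; simpl; auto.
  assert (IH : forall i j, defined_at e s (gsQ_expr n Bx m i j)) by (apply IHm; intros k Hk; apply HP; lia).
  assert (Hres : forall i, defined_at e s (gs_step_res_expr n Bx (gsQ_expr n Bx m) m i)).
  { intros i'. unfold gs_step_res_expr; simpl. repeat split; auto.
    apply defined_esum; intros; simpl. split; auto. apply defined_esum; intros; simpl; auto. }
  assert (Hv : expr_val e s (esum n (fun l => EMul (gs_step_res_expr n Bx (gsQ_expr n Bx m) m l)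
                                                  (gs_step_res_expr n Bx (gsQ_expr n Bx m) m l)))
               = gs_norm2 n (emat_val e s Bx) m).
  { rewrite val_esum. unfold gs_norm2. apply rsum_ext; intros. cbn [expr_val].
    rewrite val_gs_step_res_expr, val_gsQ_expr. reflexivity. }
  destruct (Nat.eqb j m); auto. cbn [defined_at expr_val]. rewrite Hv. assert (H := HP m ltac:(lia)).
  split; [apply Hres|]. split; [split; [apply defined_esum; intros; cbn [defined_at]; split; apply Hres|auto]|].
  apply Rgt_not_eq, sqrt_lt_R0; auto.
Qed.

Lemma params_in_gsQ_expr P n Bx m : (forall i j, params_in P (Bx i j)) ->
  forall i j, params_in P (gsQ_expr n Bx m i j).
Proof.
  intros HB. induction m; intros i j; simpl; auto. destruct (Nat.eqb j m); auto. simpl.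
  unfold gs_step_res_expr; simpl. repeat split; auto;
    repeat (apply params_in_esum; intros; simpl; repeat split; auto).
Qed.

Definition cost_expr n p (A : mat) (mu : nat -> R) (Q : emat) : expr :=
  esum p (fun i => esum p (fun l =>
    EMul (esum n (fun m => EMul (esum n (fun a => EMul (Q a i) (ECst (A a m)))) (Q m l)))
         (ECst (diagm mu l i)))).

Lemma val_cost_expr e s n p A mu Q : expr_val e s (cost_expr n p A mu Q) = costf n p A mu (emat_val e s Q).
Proof.
  unfold cost_expr, costf, mtrace. rewrite val_esum. apply rsum_ext; intros i Hi.
  rewrite val_esum. unfold mmul at 1. apply rsum_ext; intros l Hl. simpl. rewrite val_esum. f_equal.
  unfold mmul at 1. apply rsum_ext; intros m Hm. simpl. rewrite val_esum. f_equal.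
Qed.

Definition line_expr n p : emat := fun i j =>
  if andb (Nat.ltb i n) (Nat.ltb j p) then EAdd (EPar 0 i j) (EMul ETau (EPar 1 i j)) else ECst 0.
Definition env2 (Y Z : mat) : env := fun k => match k with O => Y | 1%nat => Z | _ => mzero end.
Definition line_params n p : nat -> nat -> nat -> Prop :=
  fun k i j => (k < 2)%nat /\ (i < n)%nat /\ (j < p)%nat.

Definition line_cost_expr n p A mu := cost_expr n p A mu (gsQ_expr n (line_expr n p) p).

Lemma val_line_expr n p Y Z s : supp n p Y -> supp n p Z ->
  emat_val (env2 Y Z) s (line_expr n p) = madd Y (mscale s Z).
Proof.
  intros HY HZ. apply mat_ext; intros i j.
  unfold emat_val, line_expr, madd, mscale, env2. destruct (Nat.ltb_spec i n), (Nat.ltb_spec j p); simpl;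
    try (rewrite HY, HZ by lia; lra). reflexivity.
Qed.

Lemma defined_cost_expr e s n p A mu Q : (forall i j, defined_at e s (Q i j)) ->
  defined_at e s (cost_expr n p A mu Q).
Proof. intros H. unfold cost_expr. repeat (apply defined_esum; intros; simpl; repeat split; auto). Qed.

Lemma params_in_cost_expr P n p A mu Q : (forall i j, params_in P (Q i j)) ->
  params_in P (cost_expr n p A mu Q).
Proof. intros H. unfold cost_expr. repeat (apply params_in_esum; intros; simpl; repeat split; auto). Qed.

Lemma defined_line_cost n p A mu Y Z s : supp n p Y -> supp n p Z ->
  gs_regular n (madd Y (mscale s Z)) p -> defined_at (env2 Y Z) s (line_cost_expr n p A mu).
Proof.
  intros HY HZ HP. apply defined_cost_expr, defined_gsQ_expr.
  - intros i j; unfold line_expr; destruct (andb _ _); simpl; auto.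
  - rewrite val_line_expr; auto.
Qed.

Lemma params_in_line_cost n p A mu : params_in (line_params n p) (line_cost_expr n p A mu).
Proof.
  apply params_in_cost_expr, params_in_gsQ_expr. intros i j; unfold line_expr, line_params.
  destruct (Nat.ltb_spec i n), (Nat.ltb_spec j p); simpl; auto; repeat split; auto; lia.
Qed.

Definition line_cost n p A mu (Y Z : mat) (s : R) : R :=
  costf n p A mu (qf n p (madd Y (mscale s Z))).

Lemma line_cost_as_expr n p A mu Y Z s Q : supp n p Y -> supp n p Z ->
  is_qf n p (madd Y (mscale s Z)) Q ->
  line_cost n p A mu Y Z s = expr_val (env2 Y Z) s (line_cost_expr n p A mu) /\
  defined_at (env2 Y Z) s (line_cost_expr n p A mu).
Proof.
  intros HY HZ HQ. assert (HS := supp_madd n p Y Z s HY HZ).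
  destruct (qf_unique n p _ _ HS HQ) as [E1 [E2 E3]]. split.
  - unfold line_cost, line_cost_expr. rewrite val_cost_expr, val_gsQ_expr, val_line_expr, E1, E2; auto.
  - apply defined_line_cost; auto.
Qed.

(** * Sequential compactness

   Environments whose finitely many relevant entries (listed in [l]) are
   bounded have a subsequence along which these entries converge
   (Bolzano-Weierstrass).  Hence a function that is sequentially continuous
   on a bounded, sequentially closed set of environments is bounded there. *)

Definition entry := (nat * nat * nat)%type.

Definition entry_eq_dec (x y : entry) : {x = y} + {x <> y}.
Proof. decide equality; try apply Nat.eq_dec. destruct a, p; decide equality; apply Nat.eq_dec. Defined.

Definition entries (K N M : nat) : list entry := list_prod (list_prod (seq 0 K) (seq 0 N)) (seq 0 M).

Lemma in_entries K N M k i j : In (k, i, j) (entries K N M) <-> (k < K)%nat /\ (i < N)%nat /\ (j < M)%nat.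
Proof. unfold entries. rewrite !in_prod_iff, !in_seq. lia. Qed.

Lemma small_inv eps : 0 < eps -> exists N, forall m, (N <= m)%nat -> / (INR m + 1) < eps.
Proof.
  intros H. destruct (INR_archimed eps 1 H) as [N HN]. exists N. intros m Hm.
  assert (INR N <= INR m) by (apply le_INR; auto). assert (0 <= INR N) by apply pos_INR.
  apply Rmult_lt_reg_l with (INR m + 1); [lra|]. rewrite Rinv_r by lra. nra.
Qed.

Definition incr (phi : nat -> nat) := forall m, (phi m < phi (S m))%nat.

Lemma incr_ge phi : incr phi -> forall m, (m <= phi m)%nat.
Proof. intros H m; induction m; [lia|]. specialize (H m); lia. Qed.

Lemma incr_mono phi : incr phi -> forall a b, (a <= b)%nat -> (phi a <= phi b)%nat.
Proof. intros H a b Hab; induction Hab; auto. specialize (H m); lia. Qed.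

Lemma cv_subseq u l phi : incr phi -> Un_cv u l -> Un_cv (fun m => u (phi m)) l.
Proof.
  intros Hp Hc eps He. destruct (Hc eps He) as [N HN]. exists N. intros m Hm.
  apply HN. generalize (incr_ge phi Hp m); lia.
Qed.

Lemma bw_real (v : nat -> R) M : (forall m, Rabs (v m) <= M) ->
  exists phi a, incr phi /\ Un_cv (fun m => v (phi m)) a.
Proof.
  intros HM. destruct (Bolzano_Weierstrass v (fun c => -M <= c <= M) (compact_P3 (-M) M)) as [a Ha].
  { intros m; specialize (HM m); unfold Rabs in HM; destruct (Rcase_abs (v m)); lra. }
  assert (pick : forall N m, exists p, (N <= p)%nat /\ Rabs (v p - a) < / (INR m + 1)).
  { intros N m. assert (Hp : 0 < / (INR m + 1)) by (apply Rinv_0_lt_compat; generalize (pos_INR m); lra).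
    destruct (Ha (fun x => Rabs (x - a) < / (INR m + 1)) N) as [p [Hp1 Hp2]]; [|exists p; auto].
    exists (mkposreal _ Hp). intros x Hx. unfold disc in Hx. simpl in Hx. auto. }
  set (pf := fun N m => proj1_sig (constructive_indefinite_description _ (pick N m))).
  assert (Hpf : forall N m, (N <= pf N m)%nat /\ Rabs (v (pf N m) - a) < / (INR m + 1)).
  { intros; unfold pf; destruct (constructive_indefinite_description _ _); auto. }
  set (phi := fix phi m := match m with O => pf O O | S m' => pf (S (phi m')) (S m') end).
  assert (H1 : incr phi).
  { intros m. change (phi m < pf (S (phi m)) (S m))%nat. destruct (Hpf (S (phi m)) (S m)); lia. }
  assert (H2 : forall m, Rabs (v (phi m) - a) < / (INR m + 1)).
  { intros [|m]; [apply Hpf|apply (Hpf (S (phi m)) (S m))]. }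
  exists phi, a. split; auto. intros eps He. destruct (small_inv eps He) as [N HN].
  exists N. intros m Hm. unfold Rdist. eapply Rlt_trans; [apply H2|]. apply HN; lia.
Qed.

Lemma bw_entries (l : list entry) (u : nat -> env) M :
  (forall m k i j, In (k, i, j) l -> Rabs (u m k i j) <= M) ->
  exists phi, incr phi /\ exists e : env,
    (forall k i j, In (k, i, j) l -> Un_cv (fun m => u (phi m) k i j) (e k i j)) /\
    (forall k i j, ~ In (k, i, j) l -> e k i j = 0).
Proof.
  induction l as [|[[k0 i0] j0] l IH]; intros HM.
  - exists (fun m => m). split; [intros m; lia|].
    exists (fun _ _ _ => 0). split; [intros; simpl in *; tauto|auto].
  - destruct IH as [phi1 [Hp1 [e1 [He1 He1']]]]; [intros; apply HM; simpl; auto|].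
    destruct (bw_real (fun m => u (phi1 m) k0 i0 j0) M) as [phi2 [a [Hp2 Ha]]];
      [intros; apply HM; simpl; auto|].
    exists (fun m => phi1 (phi2 m)). split.
    { intros m. assert (phi2 m < phi2 (S m))%nat by apply Hp2.
      assert (phi1 (S (phi2 m)) <= phi1 (phi2 (S m)))%nat by (apply incr_mono; auto).
      specialize (Hp1 (phi2 m)). lia. }
    exists (fun k i j => if entry_eq_dec (k, i, j) (k0, i0, j0) then a else e1 k i j). split.
    + intros k i j Hin. destruct (entry_eq_dec (k, i, j) (k0, i0, j0)) as [E|E].
      * inversion E; subst. auto.
      * destruct Hin as [Hin|Hin]; [congruence|].
        apply (cv_subseq (fun m => u (phi1 m) k i j)); auto.
    + intros k i j Hn. destruct (entry_eq_dec (k, i, j) (k0, i0, j0)) as [E|E].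
      * exfalso; apply Hn; simpl; auto.
      * apply He1'. intros H; apply Hn; simpl; auto.
Qed.

Lemma compact_bound (l : list entry) (S : env -> Prop) (h : env -> R) M :
  (forall e, S e -> forall k i j, In (k, i, j) l -> Rabs (e k i j) <= M) ->
  (forall (es : nat -> env) e, (forall m, S (es m)) ->
     (forall k i j, In (k, i, j) l -> Un_cv (fun m => es m k i j) (e k i j)) ->
     (forall k i j, ~ In (k, i, j) l -> e k i j = 0) ->
     S e /\ Un_cv (fun m => h (es m)) (h e)) ->
  exists C, forall e, S e -> Rabs (h e) <= C.
Proof.
  intros HM HC. apply NNPP. intros Hn.
  assert (Hx : forall m : nat, exists e, S e /\ INR m < Rabs (h e)).
  { intros m. apply NNPP; intros H. apply Hn. exists (INR m). intros e He.
    apply Rnot_lt_le. intros H'. apply H. exists e; auto. }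
  set (es := fun m => proj1_sig (constructive_indefinite_description _ (Hx m))).
  assert (Hes : forall m, S (es m) /\ INR m < Rabs (h (es m))).
  { intros; unfold es; destruct (constructive_indefinite_description _ _); auto. }
  destruct (bw_entries l es M) as [phi [Hp [e [He1 He2]]]]; [intros; apply HM; auto; apply Hes|].
  destruct (HC (fun m => es (phi m)) e) as [HSe Hcv]; auto; [intros; apply Hes|].
  destruct (Hcv 1 Rlt_0_1) as [N HN].
  destruct (INR_archimed 1 (Rabs (h e) + 1)) as [K HK]; [lra|].
  assert (HH := HN (max N K) ltac:(lia)). destruct (Hes (phi (max N K))) as [_ Hb].
  assert (INR K <= INR (phi (max N K))) by (apply le_INR; generalize (incr_ge phi Hp (max N K)); lia).
  unfold Rdist in HH. generalize (Rabs_triang_inv (h (es (phi (max N K)))) (h e)). lra.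
Qed.

Lemma eventually_all (l : list entry) (es : nat -> env) (e : env) delta : 0 < delta ->
  (forall k i j, In (k, i, j) l -> Un_cv (fun m => es m k i j) (e k i j)) ->
  exists N, forall m, (N <= m)%nat -> forall k i j, In (k, i, j) l -> Rabs (es m k i j - e k i j) < delta.
Proof.
  intros Hd. induction l as [|[[k0 i0] j0] l IH]; intros H.
  - exists 0%nat; intros; simpl in *; tauto.
  - destruct IH as [N1 HN1]; [intros; apply H; simpl; auto|].
    destruct (H k0 i0 j0 (or_introl eq_refl) delta Hd) as [N2 HN2].
    exists (max N1 N2). intros m Hm k i j [Hin|Hin].
    + inversion Hin; subst. apply HN2; lia.
    + apply HN1; auto; lia.
Qed.

Lemma mat_continuous_seq n p (F : mat -> R) (Xs : nat -> mat) (X : mat) : mat_continuous n p F ->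
  (forall i j, (i < n)%nat -> (j < p)%nat -> Un_cv (fun m => Xs m i j) (X i j)) ->
  Un_cv (fun m => F (Xs m)) (F X).
Proof.
  intros HF HX eps He. destruct (HF X eps He) as [d [Hd Hd']].
  destruct (eventually_all (entries 1 n p) (fun m _ => Xs m) (fun _ => X) d Hd) as [N HN].
  { intros k i j Hin. apply in_entries in Hin. apply HX; lia. }
  exists N. intros m Hm. unfold Rdist. apply Hd'. intros i j Hi Hj.
  apply (HN m Hm 0%nat i j). apply in_entries; lia.
Qed.

Lemma env2_eta (e : env) : (forall k i j, (2 <= k)%nat -> e k i j = 0) -> e = env2 (e 0%nat) (e 1%nat).
Proof.
  intros H. apply functional_extensionality; intros k. destruct k as [|[|k]]; auto.
  simpl. apply mat_ext; intros; apply H; lia.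
Qed.

Lemma stiefel_closed n p (Xs : nat -> mat) (X : mat) :
  (forall m, stiefel n p (Xs m)) ->
  (forall i j, (i < n)%nat -> (j < p)%nat -> Un_cv (fun m => Xs m i j) (X i j)) ->
  supp n p X -> stiefel n p X.
Proof.
  intros HS Hc Hz. split; auto. intros i j Hi Hj. unfold mmul, mtr.
  apply (CV_eq_const (fun m => rsum n (fun l => Xs m l i * Xs m l j))).
  - intros m. destruct (HS m) as [_ HO]. generalize (HO i j Hi Hj); unfold mmul, mtr; auto.
  - apply CV_rsum; intros; apply CV_mult; auto.
Qed.

Lemma tangent_closed n p (Xs etas : nat -> mat) (X eta : mat) :
  (forall m, tangent n p (Xs m) (etas m)) ->
  (forall i j, (i < n)%nat -> (j < p)%nat -> Un_cv (fun m => Xs m i j) (X i j)) ->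
  (forall i j, (i < n)%nat -> (j < p)%nat -> Un_cv (fun m => etas m i j) (eta i j)) ->
  supp n p eta -> tangent n p X eta.
Proof.
  intros HT Hc He Hz. split; auto. intros i j Hi Hj. unfold madd, mmul, mtr.
  apply (CV_eq_const (fun m => rsum n (fun l => Xs m l i * etas m l j) + rsum n (fun l => etas m l i * Xs m l j))).
  - intros m. destruct (HT m) as [_ H]. generalize (H i j Hi Hj); unfold madd, mmul, mtr; auto.
  - apply CV_plus; apply CV_rsum; intros; apply CV_mult; auto.
Qed.

Lemma stiefel_entry_le1 n p X i j : stiefel n p X -> Rabs (X i j) <= 1.
Proof.
  intros [HS HO]. destruct (Nat.ltb_spec i n), (Nat.ltb_spec j p);
    try (rewrite HS by lia; rewrite Rabs_R0; lra).
  apply abs_le1. generalize (HO j j H0 H0). unfold mmul, mtr, idm. rewrite Nat.eqb_refl. intros E.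
  rewrite <- E. apply (rsum_term_le n (fun l => X l j * X l j)); auto; intros; nra.
Qed.

(** * Unit tangent vectors are bounded

   On the compact set of pairs (X, eta) with X in St(p,n), eta tangent at X
   and |eta|_F = 1, the metric's quadratic form is continuous and positive,
   hence bounded below; by homogeneity, g_X(eta, eta) = 1 forces the entries
   of eta to be bounded. *)

Definition sqnorm n p (eta : mat) := rsum n (fun i => rsum p (fun j => eta i j * eta i j)).

Lemma sqnorm_nonneg n p eta : 0 <= sqnorm n p eta.
Proof. unfold sqnorm; apply rsum_nonneg; intros; apply rsum_nonneg; intros; nra. Qed.

Lemma sqnorm_term n p eta i j : (i < n)%nat -> (j < p)%nat -> eta i j * eta i j <= sqnorm n p eta.
Proof.
  intros. unfold sqnorm.
  eapply Rle_trans; [|apply (rsum_term_le n (fun i => rsum p (fun j => eta i j * eta i j)) i); auto].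
  - apply (rsum_term_le p (fun j => eta i j * eta i j)); auto; intros; nra.
  - intros; apply rsum_nonneg; intros; nra.
Qed.

Lemma sqnorm_scal n p eta c : sqnorm n p (mscale c eta) = c * c * sqnorm n p eta.
Proof.
  unfold sqnorm. rewrite <- rsum_scal; apply rsum_ext; intros; rewrite <- rsum_scal; apply rsum_ext; intros;
  unfold mscale; ring.
Qed.

Lemma tangent_scal n p X eta c : tangent n p X eta -> tangent n p X (mscale c eta).
Proof.
  intros [HS HT]. split; [intros i j H; unfold mscale; rewrite HS; auto; lra|].
  intros i j Hi Hj. generalize (HT i j Hi Hj). unfold madd, mmul, mtr, mzero, mscale. intros E.
  rewrite (rsum_ext n (fun l => X l i * (c * eta l j)) (fun l => c * (X l i * eta l j))) by (intros; ring).
  rewrite (rsum_ext n (fun l => c * eta l i * X l j) (fun l => c * (eta l i * X l j))) by (intros; ring).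
  rewrite !rsum_scal. nra.
Qed.

Definition metric_form n p (Gc : nat -> nat -> nat -> nat -> mat -> R) (X eta : mat) :=
  rsum n (fun i => rsum p (fun j => rsum n (fun k => rsum p (fun l => Gc i j k l X * eta i j * eta k l)))).

Lemma metric_form_scal n p Gc X eta c : metric_form n p Gc X (mscale c eta) = c * c * metric_form n p Gc X eta.
Proof.
  unfold metric_form. rewrite <- rsum_scal; apply rsum_ext; intros; rewrite <- rsum_scal; apply rsum_ext; intros;
  rewrite <- rsum_scal; apply rsum_ext; intros; rewrite <- rsum_scal; apply rsum_ext; intros; unfold mscale; ring.
Qed.

Lemma metric_form_cv n p Gc (Xs es : nat -> mat) X eta :
  (forall i j k l, mat_continuous n p (Gc i j k l)) ->
  (forall i j, (i < n)%nat -> (j < p)%nat -> Un_cv (fun m => Xs m i j) (X i j)) ->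
  (forall i j, (i < n)%nat -> (j < p)%nat -> Un_cv (fun m => es m i j) (eta i j)) ->
  Un_cv (fun m => metric_form n p Gc (Xs m) (es m)) (metric_form n p Gc X eta).
Proof.
  intros HG HX He. unfold metric_form.
  apply CV_rsum; intros; apply CV_rsum; intros; apply CV_rsum; intros; apply CV_rsum; intros.
  apply CV_mult; [apply CV_mult; [apply (mat_continuous_seq n p); auto|auto]|auto].
Qed.

Lemma metric_form_coercive n p Gc :
  (forall i j k l, mat_continuous n p (Gc i j k l)) ->
  (forall X eta, stiefel n p X -> tangent n p X eta -> sqnorm n p eta <> 0 -> 0 < metric_form n p Gc X eta) ->
  exists C, forall X eta, stiefel n p X -> tangent n p X eta -> sqnorm n p eta = 1 ->
    Rabs (/ metric_form n p Gc X eta) <= C.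
Proof.
  intros HGc Hpos.
  set (S1 := fun e : env => stiefel n p (e 0%nat) /\ tangent n p (e 0%nat) (e 1%nat) /\
               sqnorm n p (e 1%nat) = 1 /\ (forall k i j, (2 <= k)%nat -> e k i j = 0)).
  destruct (compact_bound (entries 2 n p) S1 (fun e => / metric_form n p Gc (e 0%nat) (e 1%nat)) 1) as [C HC].
  - intros e [HX [Ht [Hs _]]] k i j Hin. apply in_entries in Hin. destruct Hin as [Hk [Hi Hj]].
    destruct k as [|[|k]]; [apply (stiefel_entry_le1 n p); auto| |lia].
    apply abs_le1; rewrite <- Hs; apply sqnorm_term; auto.
  - intros es e HS Hcv Hz.
    assert (Hcv' : forall k i j, (k < 2)%nat -> (i < n)%nat -> (j < p)%nat ->
                     Un_cv (fun m => es m k i j) (e k i j)) by (intros; apply Hcv, in_entries; lia).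
    assert (Hz' : forall k i j, ((2 <= k)%nat \/ (n <= i)%nat \/ (p <= j)%nat) -> e k i j = 0)
      by (intros; apply Hz; rewrite in_entries; lia).
    assert (HSe : S1 e).
    { split; [|split; [|split]].
      - apply (stiefel_closed n p (fun m => es m 0%nat)); [intros m; apply (HS m)|intros; apply Hcv'; lia|].
        intros i j H; apply Hz'; lia.
      - apply (tangent_closed n p (fun m => es m 0%nat) (fun m => es m 1%nat));
          [intros m; apply (HS m)|intros; apply Hcv'; lia|intros; apply Hcv'; lia|].
        intros i j H; apply Hz'; lia.
      - apply (CV_eq_const (fun m => sqnorm n p (es m 1%nat))); [intros m; apply (HS m)|].
        unfold sqnorm. apply CV_rsum; intros; apply CV_rsum; intros; apply CV_mult; apply Hcv'; lia.
      - intros; apply Hz'; lia. }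
    split; auto. destruct HSe as [HX [Ht [Hs _]]].
    apply CV_inv; [apply metric_form_cv; auto; intros; apply Hcv'; lia|].
    apply Rgt_not_eq, Hpos; auto. lra.
  - exists C. intros X eta HX Ht Hs. apply (HC (env2 X eta)).
    split; [auto|split; [auto|split; [auto|]]]. intros [|[|k]] a b Hk; simpl; [lia|lia|reflexivity].
Qed.

Lemma unit_tangent_bounded n p g : riemannian_metric n p g -> exists K, 0 < K /\
  forall X eta, stiefel n p X -> tangent n p X eta -> g X eta eta = 1 -> forall i j, Rabs (eta i j) <= K.
Proof.
  intros [Hpd [Gc [HGs HGf]]].
  assert (Hform : forall X eta, stiefel n p X -> tangent n p X eta -> g X eta eta = metric_form n p Gc X eta)
    by (intros; unfold metric_form; apply HGf; auto).
  assert (Hpos : forall X eta, stiefel n p X -> tangent n p X eta -> sqnorm n p eta <> 0 ->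
                   0 < metric_form n p Gc X eta).
  { intros X eta HX Ht Hsq. rewrite <- Hform by auto. apply Hpd; auto.
    apply NNPP; intros Hn. apply Hsq. unfold sqnorm. apply rsum_zero; intros i Hi; apply rsum_zero; intros j Hj.
    destruct (Req_dec (eta i j) 0) as [E|E]; [rewrite E; lra|exfalso; apply Hn; eauto]. }
  destruct (metric_form_coercive n p Gc (fun i j k l => HGs i j k l 0%nat) Hpos) as [C HC].
  exists (1 + Rabs C). split; [generalize (Rabs_pos C); lra|].
  intros X eta HX Ht Hg i j.
  assert (Hg' : metric_form n p Gc X eta = 1) by (rewrite <- Hform; auto).
  assert (Ha : 0 < sqnorm n p eta).
  { destruct (Req_dec (sqnorm n p eta) 0) as [E|E]; [|generalize (sqnorm_nonneg n p eta); lra].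
    exfalso. assert (metric_form n p Gc X eta = 0); [|lra].
    assert (Hz : forall i j, (i < n)%nat -> (j < p)%nat -> eta i j = 0).
    { intros a b Ha Hb. generalize (sqnorm_term n p eta a b Ha Hb). rewrite E. intros. nra. }
    unfold metric_form. apply rsum_zero; intros; apply rsum_zero; intros.
    apply rsum_zero; intros; apply rsum_zero; intros. rewrite Hz by auto. ring. }
  destruct (sqrt_sq_pos _ Ha) as [Hs1 Hs2]. set (s := sqrt (sqnorm n p eta)) in *.
  assert (Hunit : sqnorm n p (mscale (/ s) eta) = 1) by (rewrite sqnorm_scal, <- Hs2; field; lra).
  specialize (HC X _ HX (tangent_scal n p X eta (/ s) Ht) Hunit).
  rewrite metric_form_scal, Hg' in HC.
  replace (/ (/ s * / s * 1)) with (s * s) in HC by (field; lra).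
  rewrite Hs2, Rabs_right in HC by lra. generalize (RRle_abs C). intros HCabs.
  eapply Rle_trans; [apply abs_le_sq|].
  destruct (Nat.ltb_spec i n), (Nat.ltb_spec j p);
    [generalize (sqnorm_term n p eta i j ltac:(assumption) ltac:(assumption)); lra|..];
    destruct Ht as [HS _]; rewrite HS by lia; lra.
Qed.

Definition line_cost_dd n p A mu := dexpr (dexpr (line_cost_expr n p A mu)).

Lemma second_derivative_bounded n p A mu M : exists C, forall Y Z,
  stiefel n p Y -> supp n p Z -> (forall i j, Rabs (Z i j) <= M) ->
  Rabs (expr_val (env2 Y Z) 0 (line_cost_dd n p A mu)) <= C.
Proof.
  set (S2 := fun e : env => stiefel n p (e 0%nat) /\ supp n p (e 1%nat) /\
               (forall i j, Rabs (e 1%nat i j) <= M) /\ (forall k i j, (2 <= k)%nat -> e k i j = 0)).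
  destruct (compact_bound (entries 2 n p) S2 (fun e => expr_val e 0 (line_cost_dd n p A mu)) (1 + Rabs M))
    as [C HC].
  - intros e [HX [_ [Hb _]]] k i j Hin. apply in_entries in Hin. destruct Hin as [Hk [Hi Hj]].
    generalize (RRle_abs M) (Rabs_pos M); intros.
    destruct k as [|[|k]]; [generalize (stiefel_entry_le1 n p (e 0%nat) i j HX); lra|generalize (Hb i j); lra|lia].
  - intros es e HS Hcv Hz.
    assert (Hcv' : forall k i j, (k < 2)%nat -> (i < n)%nat -> (j < p)%nat ->
                     Un_cv (fun m => es m k i j) (e k i j)) by (intros; apply Hcv, in_entries; lia).
    assert (Hz' : forall k i j, ((2 <= k)%nat \/ (n <= i)%nat \/ (p <= j)%nat) -> e k i j = 0)
      by (intros; apply Hz; rewrite in_entries; lia).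
    assert (HSe : S2 e).
    { split; [|split; [|split]].
      - apply (stiefel_closed n p (fun m => es m 0%nat)); [intros m; apply (HS m)|intros; apply Hcv'; lia|].
        intros i j H; apply Hz'; lia.
      - intros i j H; apply Hz'; lia.
      - assert (HM0 : 0 <= M)
          by (destruct (HS 0%nat) as [_ [_ [Hb _]]]; eapply Rle_trans; [apply Rabs_pos|apply (Hb 0%nat 0%nat)]).
        intros i j. destruct (Nat.ltb_spec i n), (Nat.ltb_spec j p);
          [|rewrite Hz' by lia; rewrite Rabs_R0; exact HM0..].
        apply (CV_le_bound (fun m => es m 1%nat i j)); [intros m; apply (HS m)|apply Hcv'; lia].
      - intros; apply Hz'; lia. }
    split; auto. destruct HSe as [HY [HZ [_ H2]]].
    apply (expr_cont (line_params n p) e 0 _ es (fun _ => 0)).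
    + unfold line_cost_dd. apply defined_dexpr, defined_dexpr.
      rewrite (env2_eta e H2). apply defined_line_cost; [apply HY|auto|].
      replace (madd (e 0%nat) (mscale 0 (e 1%nat))) with (e 0%nat)
        by (apply mat_ext; intros; unfold madd, mscale; ring).
      apply stiefel_regular; auto.
    + apply params_in_dexpr, params_in_dexpr, params_in_line_cost.
    + intros k i j Hp. unfold line_params in Hp. apply Hcv'; lia.
    + apply CV_const.
  - exists C. intros Y Z HY HZ HM. apply (HC (env2 Y Z)).
    split; [auto|split; [auto|split; [auto|]]]. intros [|[|k]] a b Hk; simpl; [lia|lia|reflexivity].
Qed.

(* (2) with B = X + tau eta = Y R and U = R^{-1}, the line X + (tau + s) eta
   has the same Q-factors as Y + s Z, Z = eta U; Y lies in St(p,n) and the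
   entries of Z are at most p times those of eta, since U has columns of
   norm at most 1 *)
Lemma line_reparam n p X eta tau K : stiefel n p X -> tangent n p X eta ->
  (forall i j, Rabs (eta i j) <= K) ->
  exists Y Z, stiefel n p Y /\ supp n p Z /\ (forall i j, Rabs (Z i j) <= INR p * K) /\
    forall s, exists Q, is_qf n p (madd Y (mscale s Z)) Q /\ is_qf n p (madd X (mscale (tau + s) eta)) Q.
Proof.
  intros HX Ht HK. assert (HXs : supp n p X) by apply HX. assert (Hes : supp n p eta) by apply Ht.
  set (B := madd X (mscale tau eta)).
  assert (HBs : supp n p B) by (apply supp_madd; auto).
  assert (HBf : gram_ge_id n p B) by (apply gram_ge_id_line; auto).
  destruct (gsU_facts n p B HBs HBf) as [U1 [U2 [U3 [U4 U5]]]].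
  destruct (gs_is_qf n p B HBs HBf) as [HqfB _].
  set (U := gsU n B p) in *.
  exists (gsQ n B p), (mmul p eta U). split; [apply HqfB|split; [|split]].
  - intros i j [Hi|Hj]; unfold mmul; apply rsum_zero; intros k Hk;
      [rewrite Hes by auto|rewrite U2 by auto]; lra.
  - assert (HU1 : forall k j, Rabs (U k j) <= 1).
    { intros k j. destruct (Nat.ltb_spec j p), (Nat.ltb_spec k p);
        [|rewrite U1 by lia|rewrite U2 by lia|rewrite U2 by lia]; try (rewrite Rabs_R0; lra).
      apply abs_le1. eapply Rle_trans; [|apply (U4 j); auto].
      apply (rsum_term_le p (fun i => U i j * U i j)); auto; intros; nra. }
    intros i j. unfold mmul. eapply Rle_trans; [apply rsum_abs|]. rewrite <- rsum_const.
    apply rsum_le; intros k Hk. rewrite Rabs_mult.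
    generalize (HK i k) (HU1 k j) (Rabs_pos (eta i k)) (Rabs_pos (U k j)); nra.
  - intros s. exists (gsQ n (madd X (mscale (tau + s) eta)) p).
    assert (HMs : supp n p (madd X (mscale (tau + s) eta))) by (apply supp_madd; auto).
    destruct (gs_is_qf n p _ HMs (gram_ge_id_line n p X eta (tau + s) HX Ht)) as [HqM _].
    split; auto. apply (is_qf_meq n p (mmul p (madd X (mscale (tau + s) eta)) U)).
    + intros i j Hi Hj. unfold madd, mscale, mmul. rewrite U5 by auto. fold U.
      rewrite <- rsum_scal, <- rsum_plus. apply rsum_ext; intros. unfold B, madd, mscale. ring.
    + apply is_qf_mulU; auto.
Qed.

Lemma line_cost_dd_bounded n p A mu K : exists C, forall X eta tau,
  stiefel n p X -> tangent n p X eta -> (forall i j, Rabs (eta i j) <= K) ->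
  Rabs (expr_val (env2 X eta) tau (line_cost_dd n p A mu)) <= C.
Proof.
  destruct (second_derivative_bounded n p A mu (INR p * K)) as [C HC].
  exists C. intros X eta tau HX Ht HK.
  destruct (line_reparam n p X eta tau K HX Ht HK) as [Y [Z [HY [HZ [HZb Hqf]]]]].
  assert (HXs : supp n p X) by apply HX. assert (Hes : supp n p eta) by apply Ht.
  assert (HYs : supp n p Y) by apply HY.
  set (x := line_cost_expr n p A mu).
  assert (Hboth : forall s, (expr_val (env2 X eta) (tau + s) x = expr_val (env2 Y Z) s x) /\
                            defined_at (env2 X eta) (tau + s) x /\ defined_at (env2 Y Z) s x).
  { intros s. destruct (Hqf s) as [Q [HQ1 HQ2]].
    destruct (line_cost_as_expr n p A mu X eta (tau + s) Q HXs Hes HQ2) as [E1 D1].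
    destruct (line_cost_as_expr n p A mu Y Z s Q HYs HZ HQ1) as [E2 D2].
    assert (Hcost : line_cost n p A mu X eta (tau + s) = line_cost n p A mu Y Z s).
    { unfold line_cost. destruct (qf_unique n p _ _ (supp_madd n p X eta (tau + s) HXs Hes) HQ2) as [-> _].
      destruct (qf_unique n p _ _ (supp_madd n p Y Z s HYs HZ) HQ1) as [-> _]. reflexivity. }
    split; [unfold x; rewrite <- E1, <- E2; exact Hcost|auto]. }
  assert (Hd1 : forall s, expr_val (env2 X eta) (tau + s) (dexpr x) = expr_val (env2 Y Z) s (dexpr x))
    by (apply dexpr_shift_agree; apply Hboth).
  assert (Hd2 := dexpr_shift_agree (env2 X eta) (env2 Y Z) (dexpr x) tau
                   (fun s => defined_dexpr _ _ _ (proj1 (proj2 (Hboth s))))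
                   (fun s => defined_dexpr _ _ _ (proj2 (proj2 (Hboth s)))) Hd1 0).
  unfold line_cost_dd. fold x. rewrite Rplus_0_r in Hd2. rewrite Hd2. apply HC; auto.
Qed.

Lemma line_cost_derivs n p A mu X eta u : stiefel n p X -> tangent n p X eta ->
  derivable_pt_lim (line_cost n p A mu X eta) u (expr_val (env2 X eta) u (dexpr (line_cost_expr n p A mu))) /\
  derivable_pt_lim (fun v => expr_val (env2 X eta) v (dexpr (line_cost_expr n p A mu))) u
                   (expr_val (env2 X eta) u (line_cost_dd n p A mu)).
Proof.
  intros HX Ht. assert (HXs : supp n p X) by apply HX. assert (Hes : supp n p eta) by apply Ht.
  assert (Hexpr : forall v, line_cost n p A mu X eta v = expr_val (env2 X eta) v (line_cost_expr n p A mu) /\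
                            defined_at (env2 X eta) v (line_cost_expr n p A mu)).
  { intros v. assert (HS := supp_madd n p X eta v HXs Hes).
    destruct (gs_is_qf n p _ HS (gram_ge_id_line n p X eta v HX Ht)) as [HQ _].
    apply (line_cost_as_expr n p A mu X eta v _ HXs Hes HQ). }
  split.
  - eapply dpl_ext; [apply expr_deriv, Hexpr| |reflexivity]. intros v; symmetry; apply Hexpr.
  - apply expr_deriv, defined_dexpr, Hexpr.
Qed.

Lemma qr_retraction_lipschitz n p A mu g : riemannian_metric n p g ->
  exists L, 0 < L /\
    forall (X eta : mat) (t : R),
      stiefel n p X -> tangent n p X eta -> sqrt (g X eta eta) = 1 -> 0 <= t ->
      exists d1 d0 : R,
        derivable_pt_lim
          (fun s => costf n p A mu (qr_retr n p X (madd (mscale t eta) (mscale s eta)))) 0 d1 /\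
        derivable_pt_lim
          (fun s => costf n p A mu (qr_retr n p X (mscale s eta))) 0 d0 /\
        Rabs (d1 - d0) <= L * t.
Proof.
  intros Hg. destruct (unit_tangent_bounded n p g Hg) as [K [HK HKb]].
  destruct (line_cost_dd_bounded n p A mu K) as [C HC].
  exists (Rabs C + 1). split; [generalize (Rabs_pos C); lra|].
  intros X eta t HX Ht Hg1 Ht0. apply sqrt_eq1 in Hg1.
  set (dF := fun u => expr_val (env2 X eta) u (dexpr (line_cost_expr n p A mu))).
  exists (dF t), (dF 0). split; [|split].
  - eapply dpl_ext; [apply dpl_shift, (proj1 (line_cost_derivs n p A mu X eta t HX Ht))| |reflexivity].
    intros h. unfold line_cost, qr_retr. do 2 f_equal. apply mat_ext; intros; unfold madd, mscale; ring.
  - exact (proj1 (line_cost_derivs n p A mu X eta 0 HX Ht)).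
  - destruct (MVT_abs dF (fun c => expr_val (env2 X eta) c (line_cost_dd n p A mu)) 0 t) as [c [Hc1 Hc2]].
    { intros c _. apply line_cost_derivs; auto. }
    rewrite Hc1, Rminus_0_r, (Rabs_right t) by lra.
    generalize (HC X eta c HX Ht (HKb X eta HX Ht Hg1)) (RRle_abs C) (Rabs_pos (expr_val (env2 X eta) c (line_cost_dd n p A mu))).
    nra.
Qed.

(** * The sphere S^{n-1} with the metric G_x = diag(10000 (x^(1))^2 + 1, 1, ..., 1) *)

(* the metric coefficients are quadratic polynomials in the entry X_00 *)
Lemma quadratic_entry_continuous n p a b c : (0 < n)%nat -> (0 < p)%nat ->
  mat_continuous n p (fun X => a + b * X 0%nat 0%nat + c * (X 0%nat 0%nat * X 0%nat 0%nat)).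
Proof.
  intros Hn Hp X eps He. set (x := X 0%nat 0%nat).
  set (W := Rabs b + Rabs c * (2 * Rabs x + 1) + 1).
  assert (HW : 1 <= W) by (unfold W; generalize (Rabs_pos b) (Rabs_pos c) (Rabs_pos x); nra).
  exists (Rmin 1 (eps / W)). split; [apply Rmin_pos; [lra|apply Rdiv_lt_0_compat; lra]|].
  intros Y HY. specialize (HY 0%nat 0%nat Hn Hp). set (y := Y 0%nat 0%nat) in *. fold x in HY.
  assert (Hd1 : Rabs (y - x) < 1) by (eapply Rlt_le_trans; [apply HY|apply Rmin_l]).
  assert (Hd2 : Rabs (y - x) < eps / W) by (eapply Rlt_le_trans; [apply HY|apply Rmin_r]).
  replace (a + b * y + c * (y * y) - (a + b * x + c * (x * x))) with ((y - x) * (b + c * (y + x))) by ring.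
  rewrite Rabs_mult.
  assert (Hb : Rabs (b + c * (y + x)) <= W - 1).
  { eapply Rle_trans; [apply Rabs_triang|]. rewrite Rabs_mult.
    assert (Rabs (y + x) <= 2 * Rabs x + 1).
    { eapply Rle_trans; [apply Rabs_triang|]. replace y with ((y - x) + x) by ring.
      generalize (Rabs_triang (y - x) x). lra. }
    unfold W. generalize (Rabs_pos c). nra. }
  apply Rle_lt_trans with (Rabs (y - x) * W); [apply Rmult_le_compat_l; [apply Rabs_pos|lra]|].
  apply Rlt_le_trans with (eps / W * W); [apply Rmult_lt_compat_r; lra|right; field; lra].
Qed.

(* quadratic polynomials in the entry X_00 are smooth; the partial
   derivatives are again such polynomials *)
Lemma quadratic_entry_smooth n p a b c : (0 < n)%nat -> (0 < p)%nat ->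
  mat_smooth n p (fun X => a + b * X 0%nat 0%nat + c * (X 0%nat 0%nat * X 0%nat 0%nat)).
Proof.
  intros Hn Hp k. revert a b c. induction k; intros a b c; simpl;
    [apply quadratic_entry_continuous; auto|split; [apply quadratic_entry_continuous; auto|]].
  intros i j Hi Hj. set (d := if (Nat.eqb 0 i && Nat.eqb 0 j)%bool then 1 else 0).
  exists (fun X => d * b + (2 * c * d) * X 0%nat 0%nat + 0 * (X 0%nat 0%nat * X 0%nat 0%nat)).
  split; [|apply IHk]. intros X. set (x := X 0%nat 0%nat).
  set (line := EAdd (ECst x) (EMul ETau (ECst d))).
  set (ee := EAdd (EAdd (ECst a) (EMul (ECst b) line)) (EMul (ECst c) (EMul line line))).
  eapply (dpl_ext (fun s => expr_val (fun _ _ _ => 0) s ee)); [apply expr_deriv; simpl; tauto| |].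
  - intros s. unfold ee, line, madd, mscale, elem. cbn [expr_val]. fold x d. ring.
  - unfold ee, line. cbn [expr_val dexpr]. ring.
Qed.

Definition sphere_metric_mat n (X xi eta : mat) : R :=
  sphere_metric n (fun i => X i 0%nat) (fun i => xi i 0%nat) (fun i => eta i 0%nat).

Lemma sphere_metric_riemannian n : (0 < n)%nat -> riemannian_metric n 1 (sphere_metric_mat n).
Proof.
  intros Hn. split.
  - intros X HX. split; [|split].
    + intros xi eta _ _. unfold sphere_metric_mat, sphere_metric. apply rsum_ext; intros; ring.
    + intros a b xi1 xi2 eta _ _ _. unfold sphere_metric_mat, sphere_metric, madd, mscale.
      rewrite <- !rsum_scal, <- rsum_plus. apply rsum_ext; intros; ring.
    + intros xi [HS _] [i [j Hij]].
      destruct (Nat.ltb_spec i n); [|exfalso; apply Hij; apply HS; lia].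
      destruct (Nat.eqb_spec j 0); [subst|exfalso; apply Hij; apply HS; lia].
      unfold sphere_metric_mat, sphere_metric.
      apply Rlt_le_trans with (xi i 0%nat * xi i 0%nat); [nra|].
      eapply Rle_trans; [apply (rsum_term_le n (fun i => xi i 0%nat * xi i 0%nat)); auto; intros; nra|].
      apply rsum_le. intros k Hk. destruct (Nat.eqb k 0); [|nra].
      assert (0 <= 10000 * X 0%nat 0%nat ^ 2) by (simpl; nra). nra.
  - set (delta := fun i j k l : nat => if (Nat.eqb i k && Nat.eqb j 0 && Nat.eqb l 0)%bool then 1 else 0).
    set (corner := fun i j k l : nat =>
                     if (Nat.eqb i 0 && Nat.eqb k 0 && Nat.eqb j 0 && Nat.eqb l 0)%bool then 10000 else 0).
    exists (fun i j k l X => delta i j k l + 0 * X 0%nat 0%nat + corner i j k l * (X 0%nat 0%nat * X 0%nat 0%nat)).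
    split; [intros i j k l; apply quadratic_entry_smooth; lia|].
    intros X xi eta HX [Hxs _] [Hes _]. unfold sphere_metric_mat, sphere_metric. apply rsum_ext. intros i Hi.
    cbn [rsum]. rewrite Rplus_0_l.
    rewrite (rsum_ext n _ (fun k => if Nat.eqb k i then
       (if Nat.eqb i 0 then 10000 * X 0%nat 0%nat ^ 2 + 1 else 1) * xi i 0%nat * eta i 0%nat else 0)).
    + rewrite rsum_delta by auto. ring.
    + intros k Hk. cbn [rsum]. unfold delta, corner.
      destruct (Nat.eqb_spec k i), (Nat.eqb_spec i k), (Nat.eqb_spec i 0), (Nat.eqb_spec k 0);
        subst; simpl; try lia; ring.
Qed.

Definition colm n (v : vec) : mat := fun i j => if (Nat.ltb i n && Nat.eqb j 0)%bool then v i else 0.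

Lemma colm_supp n v : supp n 1 (colm n v).
Proof. intros i j H. unfold colm. destruct (Nat.ltb_spec i n), (Nat.eqb_spec j 0); simpl; auto; lia. Qed.

Lemma colm_dot n v w : rsum n (fun l => colm n v l 0%nat * colm n w l 0%nat) = vdot n v w.
Proof. unfold vdot, colm. apply rsum_ext. intros l Hl. destruct (Nat.ltb_spec l n); [|lia]. reflexivity. Qed.

(* for p = 1 the QR retraction is the normalization retraction *)
Lemma sphere_retr_qf n A x eta v u : (0 < n)%nat ->
  stiefel n 1 (colm n x) -> tangent n 1 (colm n x) (colm n eta) ->
  (forall i, (i < n)%nat -> v i = u * eta i) ->
  sphere_cost n A (sphere_retr n x v) = costf n 1 A (fun _ => 1) (qr_retr n 1 (colm n x) (mscale u (colm n eta))).
Proof.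
  intros Hn HX Ht Hv. unfold qr_retr. rewrite qf_line by auto.
  set (B := madd (colm n x) (mscale u (colm n eta))).
  assert (HB : forall a, (a < n)%nat -> B a 0%nat = x a + v a).
  { intros a Ha. unfold B, madd, mscale, colm. destruct (Nat.ltb_spec a n); [|lia]. simpl. rewrite Hv; auto. }
  assert (HQ : forall a, (a < n)%nat -> gsQ n B 1 a 0%nat = (x a + v a) * / vnorm n (vadd x v)).
  { intros a Ha. rewrite gsQ_lt, gsq_eq by lia. unfold gs_res. cbn [rsum]. rewrite HB by auto.
    replace (x a + v a - 0) with (x a + v a) by ring. unfold vnorm. do 3 f_equal.
    rewrite gs_norm2_eq. unfold vdot, vadd. apply rsum_ext. intros l Hl.
    unfold gs_res; cbn [rsum]. rewrite HB by auto. ring. }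
  set (vn := vnorm n (vadd x v)) in *.
  unfold sphere_cost, sphere_retr, costf, mtrace, mmul, mtr, diagm. cbn [rsum]. simpl Nat.eqb.
  rewrite rsum_swap, Rplus_0_l, Rplus_0_l, Rmult_1_r. unfold vscale, vadd.
  apply rsum_ext. intros k Hk. rewrite HQ by auto.
  rewrite <- rsum_scalr. apply rsum_ext. intros i Hi. rewrite HQ by auto.
  change (vnorm n (fun i0 => x i0 + v i0)) with vn. ring.
Qed.

Lemma sphere_lipschitz n A : (1 <= n)%nat ->
  exists L, 0 < L /\
    forall (x eta : vec) (t : R),
      vnorm n x = 1 -> vdot n x eta = 0 ->
      sqrt (sphere_metric n x eta eta) = 1 -> 0 <= t ->
      exists d1 d0 : R,
        derivable_pt_lim
          (fun s => sphere_cost n A (sphere_retr n x (vadd (vscale t eta) (vscale s eta)))) 0 d1 /\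
        derivable_pt_lim
          (fun s => sphere_cost n A (sphere_retr n x (vscale s eta))) 0 d0 /\
        Rabs (d1 - d0) <= L * t.
Proof.
  intros Hn.
  destruct (qr_retraction_lipschitz n 1 A (fun _ => 1) (sphere_metric_mat n) (sphere_metric_riemannian n Hn))
    as [L [HL HLb]].
  exists L. split; auto. intros x eta t Hx Hxe Hg Ht.
  assert (HX : stiefel n 1 (colm n x)).
  { split; [apply colm_supp|]. intros i j Hi Hj. replace i with 0%nat by lia. replace j with 0%nat by lia.
    unfold mmul, mtr, idm. rewrite colm_dot. simpl. apply sqrt_eq1; auto. }
  assert (HE : tangent n 1 (colm n x) (colm n eta)).
  { split; [apply colm_supp|]. intros i j Hi Hj. replace i with 0%nat by lia. replace j with 0%nat by lia.
    unfold madd, mmul, mtr, mzero. rewrite !colm_dot. unfold vdot in *.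
    rewrite (rsum_ext n (fun i => eta i * x i) (fun i => x i * eta i)) by (intros; ring). lra. }
  assert (Hg' : sqrt (sphere_metric_mat n (colm n x) (colm n eta) (colm n eta)) = 1).
  { rewrite <- Hg. f_equal. unfold sphere_metric_mat, sphere_metric. apply rsum_ext. intros i Hi. unfold colm.
    destruct (Nat.ltb_spec i n), (Nat.ltb_spec 0 n); try lia. reflexivity. }
  destruct (HLb (colm n x) (colm n eta) t HX HE Hg' Ht) as [d1 [d0 [H1 [H2 H3]]]].
  exists d1, d0. split; [|split; auto].
  - eapply dpl_ext; [apply H1| |reflexivity]. intros s.
    rewrite (sphere_retr_qf n A x eta _ (t + s)); auto.
    + unfold qr_retr. do 3 f_equal. apply mat_ext; intros; unfold madd, mscale; ring.
    + intros i Hi; unfold vadd, vscale; ring.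
  - eapply dpl_ext; [apply H2| |reflexivity]. intros s.
    rewrite (sphere_retr_qf n A x eta _ s); auto.
Qed.

Theorem mainTheorem6 :
  (forall (n p : nat) (A : mat) (mu : nat -> R) (g : mat -> mat -> mat -> R),
     (1 <= p)%nat -> (p <= n)%nat ->
     symmetric n A ->
     0 < mu 0%nat -> (forall i, (S i < p)%nat -> mu i < mu (S i)) ->
     riemannian_metric n p g ->
     exists L, 0 < L /\
       forall (X eta : mat) (t : R),
         stiefel n p X -> tangent n p X eta -> sqrt (g X eta eta) = 1 -> 0 <= t ->
         exists d1 d0 : R,
           derivable_pt_lim
             (fun s => costf n p A mu (qr_retr n p X (madd (mscale t eta) (mscale s eta)))) 0 d1 /\
           derivable_pt_lim
             (fun s => costf n p A mu (qr_retr n p X (mscale s eta))) 0 d0 /\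
           Rabs (d1 - d0) <= L * t)
  /\
  (forall (n : nat) (A : mat),
     (1 <= n)%nat -> symmetric n A ->
     exists L, 0 < L /\
       forall (x eta : vec) (t : R),
         vnorm n x = 1 -> vdot n x eta = 0 ->
         sqrt (sphere_metric n x eta eta) = 1 -> 0 <= t ->
         exists d1 d0 : R,
           derivable_pt_lim
             (fun s => sphere_cost n A (sphere_retr n x (vadd (vscale t eta) (vscale s eta)))) 0 d1 /\
           derivable_pt_lim
             (fun s => sphere_cost n A (sphere_retr n x (vscale s eta))) 0 d0 /\
           Rabs (d1 - d0) <= L * t).
Proof.
  split.
  - intros n p A mu g _ _ _ _ _ Hg. apply qr_retraction_lipschitz; auto.
  - intros n A Hn _. apply sphere_lipschitz; auto.
Qed.
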